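(* Let $f$ be a $C^3$ incompressible velocity field ($\operatorname{tr}\nabla f\equiv0$) on $D\subset\mathbb{R}\times\mathbb{R}^3$, and let $(t_0,x)\in D$ with $d_f:=\det\nabla f(t_0,x)\neq0$. Then there exists $T_{\min}>0$ such that for every $T\in(0,T_{\min})$ the point $x$ is mesohyperbolic on $[t_0,t_0+T]$, i.e. no eigenvalue of $\nabla\psi_T(x)$ lies on the unit circle.
   Context: $\phi(t,t_0,x)$ is the solution of $\dot x=f(t,x)$ with $x(t_0)=x$; the time-$T$ map is $\psi_T(x)=\phi(t_0+T,t_0,x)$. The mesochronic velocity is $\tilde f_T(x)=\frac1T\int_{t_0}^{t_0+T}f(\tau,\phi(\tau,t_0,x))\,d\tau$, with $\nabla\psi_T=\mathrm{Id}+T\nabla\tilde f_T$ and $\nabla\tilde f_T(x)\to\nabla f(t_0,x)$ as $T\to0^+$. A point is mesohyperbolic on $[t_0,t_0+T]$ if no eigenvalue of $\nabla\psi_T(x)$ has modulus $1$. *)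

From Stdlib Require Import Reals Lra.
Open Scope R_scope.

Definition V3 : Type := (R * R * R)%type.
Definition v0 : V3 := (0, 0, 0).
Definition cmp (v : V3) (i : nat) : R :=
  match v with (a, b, c) => match i with 0%nat => a | 1%nat => b | _ => c end end.
Definition vadd (u v : V3) : V3 :=
  (cmp u 0 + cmp v 0, cmp u 1 + cmp v 1, cmp u 2 + cmp v 2).
Definition vsub (u v : V3) : V3 :=
  (cmp u 0 - cmp v 0, cmp u 1 - cmp v 1, cmp u 2 - cmp v 2).
Definition vscal (a : R) (v : V3) : V3 := (a * cmp v 0, a * cmp v 1, a * cmp v 2).
(** a norm on R^3 (all norms are equivalent) *)
Definition n1 (v : V3) : R := Rabs (cmp v 0) + Rabs (cmp v 1) + Rabs (cmp v 2).

(** matrices: only entries with indices 0,1,2 are ever used *)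
Definition M3 : Type := nat -> nat -> R.
Definition mrow (A : M3) (i : nat) (v : V3) : R :=
  A i 0%nat * cmp v 0 + A i 1%nat * cmp v 1 + A i 2%nat * cmp v 2.
Definition mapply (A : M3) (v : V3) : V3 := (mrow A 0 v, mrow A 1 v, mrow A 2 v).
Definition det3 (A : M3) : R :=
    A 0%nat 0%nat * (A 1%nat 1%nat * A 2%nat 2%nat - A 1%nat 2%nat * A 2%nat 1%nat)
  - A 0%nat 1%nat * (A 1%nat 0%nat * A 2%nat 2%nat - A 1%nat 2%nat * A 2%nat 0%nat)
  + A 0%nat 2%nat * (A 1%nat 0%nat * A 2%nat 1%nat - A 1%nat 1%nat * A 2%nat 0%nat).

(** [A] has a (complex) eigenvalue a + i b of modulus 1: there is a nonzero
    complex eigenvector u + i w, i.e. A (u + i w) = (a + i b)(u + i w). *)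
Definition has_unit_eigenvalue (A : M3) : Prop :=
  exists a b : R, exists u w : V3,
    a * a + b * b = 1 /\ (u <> v0 \/ w <> v0) /\
    mapply A u = vsub (vscal a u) (vscal b w) /\
    mapply A w = vadd (vscal b u) (vscal a w).

Definition open_domain (D : R -> V3 -> Prop) : Prop :=
  forall t y, D t y -> exists r, 0 < r /\
    forall s z, Rabs (s - t) + n1 (vsub z y) < r -> D s z.

Definition cont_on (D : R -> V3 -> Prop) (g : R -> V3 -> R) : Prop :=
  forall t y, D t y -> forall eps, 0 < eps -> exists del, 0 < del /\
    forall s z, D s z -> Rabs (s - t) + n1 (vsub z y) < del ->
      Rabs (g s z - g t y) < eps.

(** shift of the point (t,y) of R x R^3 by h in coordinate direction k:
    k = 0 is time, k = 1,2,3 are the space coordinates x1,x2,x3 *)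
Definition shift (t : R) (y : V3) (k : nat) (h : R) : R * V3 :=
  match k with
  | 0%nat => (t + h, y)
  | 1%nat => (t, vadd y (h, 0, 0))
  | 2%nat => (t, vadd y (0, h, 0))
  | _ => (t, vadd y (0, 0, h))
  end.

Definition partial (g : R -> V3 -> R) (k : nat) (t : R) (y : V3) (l : R) : Prop :=
  derivable_pt_lim (fun h => g (fst (shift t y k h)) (snd (shift t y k h))) 0 l.

Fixpoint Ck (n : nat) (D : R -> V3 -> Prop) (g : R -> V3 -> R) : Prop :=
  cont_on D g /\
  match n with
  | 0%nat => True
  | S m => forall k, (k < 4)%nat -> exists dg : R -> V3 -> R,
             (forall t y, D t y -> partial g k t y (dg t y)) /\ Ck m D dg
  end.

Definition fc (f : R -> V3 -> V3) (i : nat) : R -> V3 -> R := fun t y => cmp (f t y) i.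

Definition C3_field (D : R -> V3 -> Prop) (f : R -> V3 -> V3) : Prop :=
  forall i, (i < 3)%nat -> Ck 3 D (fc f i).

Definition spatial_jacobian (f : R -> V3 -> V3) (t : R) (y : V3) (A : M3) : Prop :=
  forall i j, (i < 3)%nat -> (j < 3)%nat -> partial (fc f i) (S j) t y (A i j).

Definition incompressible (D : R -> V3 -> Prop) (f : R -> V3 -> V3) : Prop :=
  forall t y, D t y -> exists A, spatial_jacobian f t y A /\
    A 0%nat 0%nat + A 1%nat 1%nat + A 2%nat 2%nat = 0.

Definition is_flow_near (D : R -> V3 -> Prop) (f : R -> V3 -> V3)
    (phi : R -> R -> V3 -> V3) (t0 : R) (x : V3) : Prop :=
  exists del r, 0 < del /\ 0 < r /\
    forall y, n1 (vsub y x) < r ->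
      phi t0 t0 y = y /\
      forall tau, t0 - del < tau < t0 + del ->
        D tau (phi tau t0 y) /\
        forall i, (i < 3)%nat ->
          derivable_pt_lim (fun s => cmp (phi s t0 y) i) tau
                           (cmp (f tau (phi tau t0 y)) i).

Definition frechet_at (F : V3 -> V3) (x : V3) (A : M3) : Prop :=
  forall eps, 0 < eps -> exists del, 0 < del /\
    forall h, n1 h < del ->
      n1 (vsub (vsub (F (vadd x h)) (F x)) (mapply A h)) <= eps * n1 h.

Definition psi (phi : R -> R -> V3 -> V3) (t0 T : R) : V3 -> V3 :=
  fun y => phi (t0 + T) t0 y.

Definition mesohyperbolic (phi : R -> R -> V3 -> V3) (t0 T : R) (x : V3) : Prop :=
  exists A, frechet_at (psi phi t0 T) x A /\ ~ has_unit_eigenvalue A.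

(** The Jacobian of the time-[T] map is [Id + T A + o(T)] with [A = grad f (t0, x)]: the
    flow difference [phi(x + h) - phi(x)] is compared with the solution of the linearised
    equation by a short-time Gronwall inequality, and the Jacobian itself is the limit of
    difference quotients, which are Cauchy by the same estimate.
    A unit eigenvalue [a + i b] of [Id + T A + o(T)] makes [mu = (a - 1 + i b) / T] an
    approximate eigenvalue of [A], and [|a + i b| = 1] forces [Re mu = O(T)]. As [A] is
    traceless, its characteristic polynomial is [det A - c mu - mu^3], whose real part on the
    imaginary axis is the constant [det A <> 0]; hence [det (A - mu)] is bounded away from [0],
    which contradicts the approximate eigenvector once [T] is small. *)

From Stdlib Require Import Reals Lra Psatz FunctionalExtensionality IndefiniteDescription Classical List.
From Coquelicot Require Import Complex.
Open Scope R_scope.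

(** * Real induction and Gronwall's inequality *)

Lemma le_of_le_plus_eps (x y e0 C : R) : 0 < e0 -> 0 <= C ->
  (forall e, 0 < e < e0 -> x <= y + e * C) -> x <= y.
Proof.
  intros He0 HC H.
  destruct (Rle_or_lt x y) as [|Hlt]; [assumption|].
  set (e := Rmin (e0/2) ((x - y)/(2*(C+1)))).
  assert (He : 0 < e) by (apply Rmin_pos; [lra|apply Rdiv_lt_0_compat; lra]).
  assert (He1 : e <= e0/2) by apply Rmin_l.
  assert (He2 : e * (2*(C+1)) <= x - y).
  { assert (Hmin : e <= (x-y)/(2*(C+1))) by apply Rmin_r.
    apply (Rmult_le_compat_r (2*(C+1))) in Hmin; [|lra].
    unfold Rdiv in Hmin. rewrite Rmult_assoc, Rinv_l in Hmin; lra. }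
  specialize (H e ltac:(lra)). nra.
Qed.

Lemma real_induction (P : R -> Prop) (a b : R) : a <= b -> P a ->
  (forall s, a < s <= b -> (forall t, a <= t < s -> P t) -> P s) ->
  (forall s, a <= s < b -> (forall t, a <= t <= s -> P t) ->
     exists h, 0 < h /\ forall t, s < t < s + h -> P t) ->
  forall t, a <= t <= b -> P t.
Proof.
  intros Hab Pa Hclosed Hopen.
  set (E := fun t => a <= t <= b /\ forall s, a <= s <= t -> P s).
  assert (Ea : E a) by (split; [lra|intros s Hs; replace s with a by lra; exact Pa]).
  destruct (completeness E (ex_intro _ b (fun t Et => proj2 (proj1 Et))) (ex_intro _ a Ea))
    as [sg [Hub Hlub]].
  assert (Hsa : a <= sg) by (apply Hub; exact Ea).
  assert (Hsb : sg <= b) by (apply Hlub; intros t [Ht _]; lra).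
  assert (Hbelow : forall t, a <= t < sg -> P t).
  { intros t Ht. apply NNPP; intros HPt.
    assert (Hup : is_upper_bound E t).
    { intros t' [_ Ht']. destruct (Rle_or_lt t' t) as [|Hlt]; [assumption|].
      exfalso; apply HPt, Ht'; lra. }
    specialize (Hlub t Hup); lra. }
  assert (Hsg : forall t, a <= t <= sg -> P t).
  { intros t Ht. destruct (Rlt_or_le t sg); [apply Hbelow; lra|].
    replace t with sg by lra.
    destruct (Req_dec sg a) as [->|]; [exact Pa|apply Hclosed; [lra|exact Hbelow]]. }
  assert (Hend : sg = b).
  { destruct (Req_dec sg b) as [|Hne]; [assumption|exfalso].
    destruct (Hopen sg ltac:(lra) Hsg) as [h [Hh HP]].
    set (t := sg + Rmin h (b - sg) / 2).
    assert (Hmin : 0 < Rmin h (b - sg) <= h /\ Rmin h (b - sg) <= b - sg)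
      by (split; [split; [apply Rmin_pos; lra|apply Rmin_l]|apply Rmin_r]).
    assert (Et : E t).
    { split; [unfold t; lra|]. intros s Hs.
      destruct (Rle_or_lt s sg); [apply Hsg; lra|apply HP; unfold t in Hs; lra]. }
    specialize (Hub t Et). unfold t in Hub. lra. }
  intros t Ht. apply Hsg. lra.
Qed.

Lemma continuity_pt_ball (u : R -> R) t : continuity_pt u t ->
  forall eps, 0 < eps -> exists del, 0 < del /\
    forall s, Rabs (s - t) < del -> Rabs (u s - u t) < eps.
Proof.
  intros Hc eps He. destruct (Hc eps He) as [del [Hd H]].
  exists del; split; [lra|]. intros s Hs.
  destruct (Req_dec s t) as [->|Hne]; [rewrite Rminus_diag, Rabs_R0; lra|].
  apply (H s). split; [split; [exact I|congruence]|exact Hs].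
Qed.

Lemma continuity_pt_le_left (g : R -> R) (a s : R) : continuity_pt g s -> a < s ->
  (forall t, a <= t < s -> g t <= 0) -> g s <= 0.
Proof.
  intros Hc Has Hle. destruct (Rle_or_lt (g s) 0) as [|Hpos]; [assumption|exfalso].
  destruct (continuity_pt_ball g s Hc (g s / 2) ltac:(lra)) as [del [Hdel Hball]].
  set (t := s - Rmin del (s - a) / 2).
  assert (Hmin : 0 < Rmin del (s - a) <= del /\ Rmin del (s - a) <= s - a)
    by (split; [split; [apply Rmin_pos; lra|apply Rmin_l]|apply Rmin_r]).
  assert (Ht : Rabs (g t - g s) < g s / 2)
    by (apply Hball; unfold t; rewrite Rabs_left; lra).
  apply Rabs_def2 in Ht. assert (g t <= 0) by (apply Hle; unfold t; lra). lra.
Qed.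

(** The last hypothesis bounds the upper right Dini derivative of [u] by [K u + eta]. *)
Lemma barrier_bound (u : R -> R) (a b K eta M0 al be : R) :
  a <= b -> 0 <= K -> 0 <= be ->
  (forall t, a <= t <= b -> continuity_pt u t) ->
  u a <= al ->
  K * (al + be * (b - a)) + eta < be ->
  al + be * (b - a) <= M0 ->
  (forall t, a <= t < b -> u t <= M0 -> forall e, 0 < e -> exists h0, 0 < h0 /\
      forall h, 0 < h < h0 -> u (t + h) <= u t + h * (K * u t + eta + e)) ->
  forall t, a <= t <= b -> u t <= al + be * (t - a).
Proof.
  intros Hab HK Hbe Hc Ha Hgap HM Hd.
  apply real_induction; [exact Hab|lra| |].
  - intros s Hs Hbelow.
    enough (u s - (al + be * (s - a)) <= 0) by lra.
    apply (continuity_pt_le_left (fun t => u t - (al + be * (t - a))) a);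
      [|lra|intros t Ht; specialize (Hbelow t Ht); lra].
    apply (continuity_pt_minus u (fun t => al + be * (t - a))); [apply Hc; lra|].
    apply derivable_continuous_pt; reg.
  - intros s Hs Hle. specialize (Hle s ltac:(lra)).
    assert (Hws : al + be * (s - a) <= al + be * (b - a)) by nra.
    set (e := be - K * (al + be * (b - a)) - eta).
    destruct (Hd s Hs ltac:(lra) e ltac:(unfold e; lra)) as [h0 [Hh0 Hh]].
    exists h0; split; [exact Hh0|]. intros t Ht.
    specialize (Hh (t - s) ltac:(lra)). replace (s + (t - s)) with t in Hh by ring.
    assert (K * u s <= K * (al + be * (b - a))) by (apply Rmult_le_compat_l; lra).
    assert ((t - s) * (K * u s + eta + e) <= (t - s) * be) by (apply Rmult_le_compat_l; unfold e; lra).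
    nra.
Qed.

(** Barrier lines of slope [2 (K al + eta) + e] work because [K (b - a) <= 1/4]. *)
Lemma gronwall_short_time (u : R -> R) (a b K eta al M0 : R) :
  a <= b -> 0 <= K -> 0 <= eta -> K * (b - a) <= 1/4 -> 0 <= al ->
  (forall t, a <= t <= b -> continuity_pt u t) ->
  u a <= al ->
  al + 2 * (K * al + eta) * (b - a) < M0 ->
  (forall t, a <= t < b -> u t <= M0 -> forall e, 0 < e -> exists h0, 0 < h0 /\
      forall h, 0 < h < h0 -> u (t + h) <= u t + h * (K * u t + eta + e)) ->
  forall t, a <= t <= b -> u t <= al + 2 * (K * al + eta) * (t - a).
Proof.
  intros Hab HK Heta HKb Hal Hc Ha HM Hd t Ht.
  set (C := 1 + (2 * K + 1) * (b - a)).
  assert (HC : 1 <= C) by (unfold C; nra).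
  apply (le_of_le_plus_eps _ _ ((M0 - (al + 2 * (K * al + eta) * (b - a))) / C)
           (1 + (2 * K + 1) * (t - a))); [apply Rdiv_lt_0_compat; lra|nra|].
  intros e [He0 He1].
  assert (HeC : e * C < M0 - (al + 2 * (K * al + eta) * (b - a))).
  { apply (Rmult_lt_compat_r C) in He1; [|lra].
    unfold Rdiv in He1. rewrite Rmult_assoc, Rinv_l, Rmult_1_r in He1; lra. }
  set (be := 2 * (K * (al + e) + eta) + e).
  assert (Hslope : K * ((2 * (K * (al + e) + eta) + e) * (b - a)) <= be / 4).
  { replace (K * ((2 * (K * (al + e) + eta) + e) * (b - a))) with
      ((2 * (K * (al + e) + eta) + e) * (K * (b - a))) by ring.
    apply Rmult_le_compat_l with (r := be) in HKb; unfold be in *; nra. }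
  assert (Hbar := barrier_bound u a b K eta M0 (al + e) be Hab HK
    ltac:(unfold be; nra) Hc ltac:(lra) ltac:(unfold be in *; nra)
    ltac:(unfold C, be in *; nra) Hd t Ht).
  unfold be in Hbar. nra.
Qed.

Lemma Rabs_right_increment (F : R -> R) t l : derivable_pt_lim F t l ->
  forall e, 0 < e -> exists h0, 0 < h0 /\ forall h, 0 < h < h0 ->
    Rabs (F (t + h)) <= Rabs (F t) + h * (Rabs l + e).
Proof.
  intros Hd e He. destruct (Hd e He) as [del Hdel].
  exists del; split; [apply cond_pos|]. intros h Hh.
  assert (H1 := Hdel h ltac:(lra) ltac:(rewrite Rabs_pos_eq; lra)).
  assert (H2 : Rabs (F (t + h) - F t - h * l) <= h * e).
  { replace (F (t + h) - F t - h * l) with (h * ((F (t + h) - F t) / h - l)) by (field; lra).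
    rewrite Rabs_mult, (Rabs_pos_eq h) by lra. apply Rmult_le_compat_l; lra. }
  replace (F (t + h)) with (F t + h * l + (F (t + h) - F t - h * l)) by ring.
  pose proof (Rabs_triang (F t + h * l) (F (t + h) - F t - h * l)).
  pose proof (Rabs_triang (F t) (h * l)).
  rewrite Rabs_mult, (Rabs_pos_eq h) in * by lra. lra.
Qed.

Ltac vec_ring := apply f_equal2; [apply f_equal2|]; ring.

Lemma vec_eta (v : V3) : v = (cmp v 0, cmp v 1, cmp v 2).
Proof. destruct v as [[a b] c]. reflexivity. Qed.

Lemma n1_ge0 v : 0 <= n1 v.
Proof.
  unfold n1. pose proof (Rabs_pos (cmp v 0)); pose proof (Rabs_pos (cmp v 1));
  pose proof (Rabs_pos (cmp v 2)). lra.
Qed.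

Lemma n1_v0 : n1 v0 = 0.
Proof. unfold n1, v0; simpl. rewrite Rabs_R0. ring. Qed.

Lemma n1_scal c v : n1 (vscal c v) = Rabs c * n1 v.
Proof. unfold n1, vscal; simpl. rewrite !Rabs_mult. ring. Qed.

Lemma n1_cmp v k : (k < 3)%nat -> Rabs (cmp v k) <= n1 v.
Proof.
  intros Hk. unfold n1.
  pose proof (Rabs_pos (cmp v 0)); pose proof (Rabs_pos (cmp v 1)); pose proof (Rabs_pos (cmp v 2)).
  destruct k as [|[|[|k]]]; try lia; lra.
Qed.

Lemma n1_vadd u v : n1 (vadd u v) <= n1 u + n1 v.
Proof.
  unfold n1, vadd; simpl.
  pose proof (Rabs_triang (cmp u 0) (cmp v 0)); pose proof (Rabs_triang (cmp u 1) (cmp v 1));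
  pose proof (Rabs_triang (cmp u 2) (cmp v 2)). lra.
Qed.

Lemma n1_vsub u v : n1 (vsub u v) <= n1 u + n1 v.
Proof.
  unfold n1, vsub; simpl.
  pose proof (Rabs_triang (cmp u 0) (- cmp v 0)); pose proof (Rabs_triang (cmp u 1) (- cmp v 1));
  pose proof (Rabs_triang (cmp u 2) (- cmp v 2)). rewrite !Rabs_Ropp in *. unfold Rminus. lra.
Qed.

Lemma n1_vsub_triangle a b c : n1 (vsub a c) <= n1 (vsub a b) + n1 (vsub b c).
Proof.
  replace (vsub a c) with (vadd (vsub a b) (vsub b c)); [apply n1_vadd|].
  unfold vadd, vsub; simpl. vec_ring.
Qed.

Lemma n1_pos v : v <> v0 -> 0 < n1 v.
Proof.
  intros Hv. destruct (Rlt_or_le 0 (n1 v)) as [|Hle]; [assumption|exfalso; apply Hv].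
  unfold n1 in Hle.
  pose proof (Rabs_pos (cmp v 0)); pose proof (Rabs_pos (cmp v 1)); pose proof (Rabs_pos (cmp v 2)).
  assert (Hzero : forall y, Rabs y <= 0 -> y = 0).
  { intros y Hy. destruct (Req_dec y 0) as [|Hne]; [assumption|].
    pose proof (Rabs_pos_lt y Hne). lra. }
  rewrite (vec_eta v). unfold v0.
  rewrite (Hzero (cmp v 0)), (Hzero (cmp v 1)), (Hzero (cmp v 2)) by lra. reflexivity.
Qed.

Lemma n1_vsub_v0 v : n1 (vsub v v0) = n1 v.
Proof. unfold n1, vsub, v0; simpl. rewrite !Rminus_0_r. reflexivity. Qed.

Lemma vsub_diag v : vsub v v = v0.
Proof. unfold vsub, v0. vec_ring. Qed.

Lemma vadd_vsub_l x h : vsub (vadd x h) x = h.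
Proof. rewrite (vec_eta h) at 2. unfold vsub, vadd; simpl. vec_ring. Qed.

Definition ebas (j : nat) : V3 :=
  match j with 0%nat => (1, 0, 0) | 1%nat => (0, 1, 0) | _ => (0, 0, 1) end.

Lemma n1_ebas j : n1 (ebas j) = 1.
Proof. destruct j as [|[|j]]; unfold n1, ebas; simpl; rewrite ?Rabs_R1, ?Rabs_R0; ring. Qed.

Lemma mapply_v0 M : mapply M v0 = v0.
Proof. unfold mapply, mrow, v0; simpl. vec_ring. Qed.

Lemma mapply_vadd_scal M c u v :
  mapply M (vadd (vscal c u) v) = vadd (vscal c (mapply M u)) (mapply M v).
Proof. unfold mapply, mrow, vadd, vscal; simpl. vec_ring. Qed.

Lemma mapply_vsub M u v : mapply M (vsub u v) = vsub (mapply M u) (mapply M v).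
Proof. unfold mapply, mrow, vsub; simpl. vec_ring. Qed.

Lemma mapply_vscal M c u : mapply M (vscal c u) = vscal c (mapply M u).
Proof. unfold mapply, mrow, vscal; simpl. vec_ring. Qed.

Definition mnorm (A : M3) : R :=
  Rabs (A 0%nat 0%nat) + Rabs (A 0%nat 1%nat) + Rabs (A 0%nat 2%nat) +
  Rabs (A 1%nat 0%nat) + Rabs (A 1%nat 1%nat) + Rabs (A 1%nat 2%nat) +
  Rabs (A 2%nat 0%nat) + Rabs (A 2%nat 1%nat) + Rabs (A 2%nat 2%nat).

Lemma mnorm_entry A i j : (i < 3)%nat -> (j < 3)%nat -> Rabs (A i j) <= mnorm A.
Proof.
  intros Hi Hj. unfold mnorm.
  pose proof (Rabs_pos (A 0%nat 0%nat)); pose proof (Rabs_pos (A 0%nat 1%nat));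
  pose proof (Rabs_pos (A 0%nat 2%nat)); pose proof (Rabs_pos (A 1%nat 0%nat));
  pose proof (Rabs_pos (A 1%nat 1%nat)); pose proof (Rabs_pos (A 1%nat 2%nat));
  pose proof (Rabs_pos (A 2%nat 0%nat)); pose proof (Rabs_pos (A 2%nat 1%nat));
  pose proof (Rabs_pos (A 2%nat 2%nat)).
  destruct i as [|[|[|i]]]; try lia; destruct j as [|[|[|j]]]; try lia; lra.
Qed.

Lemma mnorm_ge0 A : 0 <= mnorm A.
Proof. pose proof (mnorm_entry A 0 0 ltac:(lia) ltac:(lia)). pose proof (Rabs_pos (A 0%nat 0%nat)). lra. Qed.

Lemma n1_mapply A v : n1 (mapply A v) <= mnorm A * n1 v.
Proof.
  assert (Hrow : forall a0 a1 a2, Rabs (a0 * cmp v 0 + a1 * cmp v 1 + a2 * cmp v 2) <=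
            (Rabs a0 + Rabs a1 + Rabs a2) * n1 v).
  { intros. unfold n1.
    pose proof (Rabs_triang (a0 * cmp v 0 + a1 * cmp v 1) (a2 * cmp v 2)).
    pose proof (Rabs_triang (a0 * cmp v 0) (a1 * cmp v 1)). rewrite !Rabs_mult in *.
    pose proof (Rabs_pos a0); pose proof (Rabs_pos a1); pose proof (Rabs_pos a2);
    pose proof (Rabs_pos (cmp v 0)); pose proof (Rabs_pos (cmp v 1)); pose proof (Rabs_pos (cmp v 2)).
    nra. }
  unfold n1 at 1, mapply, mrow, mnorm; simpl. rewrite Rmult_plus_distr_r.
  pose proof (Hrow (A 0%nat 0%nat) (A 0%nat 1%nat) (A 0%nat 2%nat));
  pose proof (Hrow (A 1%nat 0%nat) (A 1%nat 1%nat) (A 1%nat 2%nat));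
  pose proof (Hrow (A 2%nat 0%nat) (A 2%nat 1%nat) (A 2%nat 2%nat)). nra.
Qed.

Definition is_vderiv (W : R -> V3) (t : R) (d : V3) : Prop :=
  forall k, (k < 3)%nat -> derivable_pt_lim (fun s => cmp (W s) k) t (cmp d k).

Lemma is_vderiv_vsub W1 W2 t d1 d2 : is_vderiv W1 t d1 -> is_vderiv W2 t d2 ->
  is_vderiv (fun s => vsub (W1 s) (W2 s)) t (vsub d1 d2).
Proof.
  intros H1 H2 k Hk. destruct k as [|[|[|k]]]; try lia; simpl;
  apply (derivable_pt_lim_minus (fun s => cmp (W1 s) _) (fun s => cmp (W2 s) _)); auto.
Qed.

Lemma is_vderiv_vadd W1 W2 t d1 d2 : is_vderiv W1 t d1 -> is_vderiv W2 t d2 ->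
  is_vderiv (fun s => vadd (W1 s) (W2 s)) t (vadd d1 d2).
Proof.
  intros H1 H2 k Hk. destruct k as [|[|[|k]]]; try lia; simpl;
  apply (derivable_pt_lim_plus (fun s => cmp (W1 s) _) (fun s => cmp (W2 s) _)); auto.
Qed.

Lemma is_vderiv_vscal c W t d : is_vderiv W t d -> is_vderiv (fun s => vscal c (W s)) t (vscal c d).
Proof.
  intros H k Hk. destruct k as [|[|[|k]]]; try lia; simpl;
  apply (derivable_pt_lim_scal (fun s => cmp (W s) _)); auto.
Qed.

Lemma is_vderiv_const v t : is_vderiv (fun _ => v) t v0.
Proof. intros k Hk. destruct k as [|[|[|k]]]; try lia; apply derivable_pt_lim_const. Qed.

Lemma is_vderiv_linear t0 v t : is_vderiv (fun s => vscal (s - t0) v) t v.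
Proof.
  intros k Hk. replace (cmp v k) with (1 * cmp v k) by ring.
  destruct k as [|[|[|k]]]; try lia; simpl;
  apply (derivable_pt_lim_scal_right (fun s => s - t0));
  replace 1 with (1 - 0) by ring;
  apply (derivable_pt_lim_minus id (fct_cte t0)); auto using derivable_pt_lim_id, derivable_pt_lim_const.
Qed.

Lemma is_vderiv_continuity_n1 W t d : is_vderiv W t d -> continuity_pt (fun s => n1 (W s)) t.
Proof.
  intros H. unfold n1.
  assert (Hk : forall k, (k < 3)%nat -> continuity_pt (fun s => Rabs (cmp (W s) k)) t).
  { intros k Hk. apply (continuity_pt_comp (fun s => cmp (W s) k) Rabs); [|apply Rcontinuity_abs].
    apply (derivable_continuous_pt _ _ (exist _ _ (H k Hk))). }
  apply (continuity_pt_plus (fun s => Rabs (cmp (W s) 0) + Rabs (cmp (W s) 1))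
                            (fun s => Rabs (cmp (W s) 2))); [|apply Hk; lia].
  apply (continuity_pt_plus (fun s => Rabs (cmp (W s) 0)) (fun s => Rabs (cmp (W s) 1)));
    apply Hk; lia.
Qed.

Lemma n1_right_increment (W : R -> V3) (d : V3) t : is_vderiv W t d ->
  forall e, 0 < e -> exists h0, 0 < h0 /\ forall h, 0 < h < h0 ->
    n1 (W (t + h)) <= n1 (W t) + h * (n1 d + e).
Proof.
  intros Hd e He.
  destruct (Rabs_right_increment _ _ _ (Hd 0%nat ltac:(lia)) (e/3) ltac:(lra)) as [h1 [Hh1 H1]].
  destruct (Rabs_right_increment _ _ _ (Hd 1%nat ltac:(lia)) (e/3) ltac:(lra)) as [h2 [Hh2 H2]].
  destruct (Rabs_right_increment _ _ _ (Hd 2%nat ltac:(lia)) (e/3) ltac:(lra)) as [h3 [Hh3 H3]].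
  exists (Rmin h1 (Rmin h2 h3)). split; [repeat apply Rmin_pos; lra|].
  intros h Hh.
  pose proof (Rmin_l h1 (Rmin h2 h3)); pose proof (Rmin_r h1 (Rmin h2 h3));
  pose proof (Rmin_l h2 h3); pose proof (Rmin_r h2 h3).
  specialize (H1 h ltac:(lra)). specialize (H2 h ltac:(lra)). specialize (H3 h ltac:(lra)).
  unfold n1. lra.
Qed.

Lemma gronwall_vderiv (W D : R -> V3) (a b K eta al M0 : R) :
  a <= b -> 0 <= K -> 0 <= eta -> K * (b - a) <= 1/4 -> 0 <= al ->
  (forall t, a <= t <= b -> is_vderiv W t (D t)) ->
  n1 (W a) <= al ->
  al + 2 * (K * al + eta) * (b - a) < M0 ->
  (forall t, a <= t < b -> n1 (W t) <= M0 -> n1 (D t) <= K * n1 (W t) + eta) ->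
  forall t, a <= t <= b -> n1 (W t) <= al + 2 * (K * al + eta) * (t - a).
Proof.
  intros Hab HK Heta HKb Hal Hd Ha HM Hb.
  apply (gronwall_short_time (fun t => n1 (W t)) a b K eta al M0); try assumption.
  - intros t Ht. exact (is_vderiv_continuity_n1 W t (D t) (Hd t Ht)).
  - intros t Ht HWt e He.
    destruct (n1_right_increment W (D t) t (Hd t ltac:(lra)) e He) as [h0 [Hh0 Hinc]].
    exists h0; split; [exact Hh0|]. intros h Hh.
    specialize (Hinc h Hh). specialize (Hb t Ht HWt). nra.
Qed.

Lemma n1_limit_le (a bl : V3) (b : nat -> V3) (e : nat -> R) B :
  (forall i, (i < 3)%nat -> Un_cv (fun n => cmp (b n) i) (cmp bl i)) ->
  (forall eps, 0 < eps -> exists N, forall n, (n >= N)%nat -> e n < eps) ->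
  (forall n, n1 (vsub a (b n)) <= B + e n) ->
  n1 (vsub a bl) <= B.
Proof.
  intros Hcv He Hb.
  apply (le_of_le_plus_eps _ _ 1 4); [lra|lra|]. intros eps Heps.
  destruct (He eps ltac:(lra)) as [N0 HN0].
  destruct (Hcv 0%nat ltac:(lia) eps ltac:(lra)) as [N1 HN1].
  destruct (Hcv 1%nat ltac:(lia) eps ltac:(lra)) as [N2 HN2].
  destruct (Hcv 2%nat ltac:(lia) eps ltac:(lra)) as [N3 HN3].
  set (n := (N0 + N1 + N2 + N3)%nat).
  specialize (HN0 n ltac:(unfold n; lia)). specialize (HN1 n ltac:(unfold n; lia)).
  specialize (HN2 n ltac:(unfold n; lia)). specialize (HN3 n ltac:(unfold n; lia)).
  specialize (Hb n). unfold Rdist in *.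
  pose proof (n1_vsub_triangle a (b n) bl).
  assert (n1 (vsub (b n) bl) <= 3 * eps) by (unfold n1, vsub; simpl; lra).
  lra.
Qed.

(** * Taylor bounds on a cube *)

Definition cube (x : V3) (rho : R) (z : V3) : Prop :=
  Rabs (cmp z 0 - cmp x 0) < rho /\ Rabs (cmp z 1 - cmp x 1) < rho /\
  Rabs (cmp z 2 - cmp x 2) < rho.

Definition setk (z : V3) (k : nat) (t : R) : V3 :=
  match z with (a, b, c) => match k with 0%nat => (t, b, c) | 1%nat => (a, t, c) | _ => (a, b, t) end end.

Definition cube_partials (x : V3) (rho : R) (h : V3 -> R) (H : nat -> V3 -> R) : Prop :=
  forall z k, cube x rho z -> (k < 3)%nat ->
    derivable_pt_lim (fun t => h (setk z k t)) (cmp z k) (H k z).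

Lemma cube_center x rho : 0 < rho -> cube x rho x.
Proof. intros. unfold cube. rewrite !Rminus_diag, Rabs_R0. lra. Qed.

Lemma n1_lt_cube x rho z : n1 (vsub z x) < rho -> cube x rho z.
Proof.
  unfold n1, vsub, cube; simpl. intros H.
  pose proof (Rabs_pos (cmp z 0 - cmp x 0)); pose proof (Rabs_pos (cmp z 1 - cmp x 1));
  pose proof (Rabs_pos (cmp z 2 - cmp x 2)). lra.
Qed.

Lemma mean_value_bound (F F' : R -> R) a b M :
  (forall t, Rmin a b <= t <= Rmax a b -> derivable_pt_lim F t (F' t)) ->
  (forall t, Rmin a b <= t <= Rmax a b -> Rabs (F' t) <= M) ->
  Rabs (F b - F a) <= M * Rabs (b - a).
Proof.
  intros Hd Hb.
  destruct (Rtotal_order a b) as [Hlt|[Heq|Hgt]].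
  - rewrite Rmin_left, Rmax_right in * by lra.
    destruct (MVT_cor2 F F' a b Hlt Hd) as [c [Hc Hc2]].
    rewrite Hc, Rabs_mult. apply Rmult_le_compat_r; [apply Rabs_pos|apply Hb; lra].
  - subst. rewrite !Rminus_diag, Rabs_R0, Rmult_0_r. lra.
  - rewrite Rmin_right, Rmax_left in * by lra.
    destruct (MVT_cor2 F F' b a Hgt Hd) as [c [Hc Hc2]].
    rewrite <- Rabs_Ropp, Ropp_minus_distr, Hc, Rabs_mult, <- (Rabs_Ropp (b - a)), Ropp_minus_distr.
    apply Rmult_le_compat_r; [apply Rabs_pos|apply Hb; lra].
Qed.

Lemma mean_value_bound_affine (F F' : R -> R) K a b M :
  (forall t, Rmin a b <= t <= Rmax a b -> derivable_pt_lim F t (F' t)) ->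
  (forall t, Rmin a b <= t <= Rmax a b -> Rabs (F' t - K) <= M) ->
  Rabs (F b - F a - (b - a) * K) <= M * Rabs (b - a).
Proof.
  intros Hd Hb.
  replace (F b - F a - (b - a) * K) with ((F b - b * K) - (F a - a * K)) by ring.
  apply (mean_value_bound (fun t => F t - t * K) (fun t => F' t - K)); [|exact Hb].
  intros t Ht. apply (derivable_pt_lim_minus F (fun t => t * K)); [auto|].
  pose proof (derivable_pt_lim_scal_right id t 1 K (derivable_pt_lim_id t)) as Hlin.
  rewrite Rmult_1_l in Hlin. exact Hlin.
Qed.

Lemma between_Rabs_lt a b x0 rho t : Rabs (a - x0) < rho -> Rabs (b - x0) < rho ->
  Rmin a b <= t <= Rmax a b -> Rabs (t - x0) < rho.
Proof.
  intros Ha Hb Ht. apply Rabs_def2 in Ha. apply Rabs_def2 in Hb.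
  destruct (Rle_dec a b).
  - rewrite Rmin_left, Rmax_right in Ht by lra. apply Rabs_def1; lra.
  - rewrite Rmin_right, Rmax_left in Ht by lra. apply Rabs_def1; lra.
Qed.

Lemma between_Rabs_le a b t : Rmin a b <= t <= Rmax a b -> Rabs (t - a) <= Rabs (b - a).
Proof.
  intros Ht. destruct (Rle_dec a b).
  - rewrite Rmin_left, Rmax_right in Ht by lra. rewrite !Rabs_pos_eq; lra.
  - rewrite Rmin_right, Rmax_left in Ht by lra. rewrite !Rabs_left1; lra.
Qed.

Ltac in_cube := unfold cube; simpl; repeat split; try lra;
  eapply between_Rabs_lt; [| |eassumption]; assumption.

(** The cube is convex along coordinate segments, so both bounds follow by moving one
    coordinate at a time and applying the mean value theorem. *)
Lemma cube_lipschitz x rho (h : V3 -> R) (H : nat -> V3 -> R) M :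
  cube_partials x rho h H ->
  (forall z k, cube x rho z -> (k < 3)%nat -> Rabs (H k z) <= M) ->
  forall z z', cube x rho z -> cube x rho z' -> Rabs (h z - h z') <= M * n1 (vsub z z').
Proof.
  intros Hd Hb z z' Hz Hz'.
  destruct x as [[x0 x1] x2], z as [[a b] c], z' as [[a' b'] c'].
  unfold cube in *; simpl in *. destruct Hz as [Ha [Hb' Hc]], Hz' as [Ha' [Hb'' Hc']].
  assert (S0 : Rabs (h (a, b', c') - h (a', b', c')) <= M * Rabs (a - a')).
  { apply (mean_value_bound (fun t => h (t, b', c')) (fun t => H 0%nat (t, b', c'))).
    - intros t Ht. apply (Hd (t, b', c') 0%nat); [in_cube|lia].
    - intros t Ht. apply Hb; [in_cube|lia]. }
  assert (S1 : Rabs (h (a, b, c') - h (a, b', c')) <= M * Rabs (b - b')).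
  { apply (mean_value_bound (fun t => h (a, t, c')) (fun t => H 1%nat (a, t, c'))).
    - intros t Ht. apply (Hd (a, t, c') 1%nat); [in_cube|lia].
    - intros t Ht. apply Hb; [in_cube|lia]. }
  assert (S2 : Rabs (h (a, b, c) - h (a, b, c')) <= M * Rabs (c - c')).
  { apply (mean_value_bound (fun t => h (a, b, t)) (fun t => H 2%nat (a, b, t))).
    - intros t Ht. apply (Hd (a, b, t) 2%nat); [in_cube|lia].
    - intros t Ht. apply Hb; [in_cube|lia]. }
  unfold n1, vsub; simpl.
  replace (h (a, b, c) - h (a', b', c')) with ((h (a, b, c) - h (a, b, c'))
     + (h (a, b, c') - h (a, b', c')) + (h (a, b', c') - h (a', b', c'))) by ring.
  pose proof (Rabs_triang (h (a, b, c) - h (a, b, c') + (h (a, b, c') - h (a, b', c')))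
                          (h (a, b', c') - h (a', b', c'))).
  pose proof (Rabs_triang (h (a, b, c) - h (a, b, c')) (h (a, b, c') - h (a, b', c'))). lra.
Qed.

Lemma setk_cmp w k : (k < 3)%nat -> setk w k (cmp w k) = w.
Proof. intros Hk. destruct w as [[a b] c]. destruct k as [|[|[|k]]]; try lia; reflexivity. Qed.

Lemma cmp_setk w k t : (k < 3)%nat -> cmp (setk w k t) k = t.
Proof. intros Hk. destruct w as [[a b] c]. destruct k as [|[|[|k]]]; try lia; reflexivity. Qed.

Lemma setk_setk w k t t' : setk (setk w k t) k t' = setk w k t'.
Proof. destruct w as [[a b] c]. destruct k as [|[|[|k]]]; reflexivity. Qed.

Lemma cube_setk x rho w k t : (k < 3)%nat -> cube x rho w -> Rabs (t - cmp x k) < rho ->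
  cube x rho (setk w k t).
Proof.
  intros Hk Hw Ht. destruct w as [[a b] c]. unfold cube in *; simpl in *.
  destruct k as [|[|[|k]]]; try lia; simpl; tauto.
Qed.

Lemma cube_taylor_step x rho (h : V3 -> R) (H : nat -> V3 -> R) z' M2 N w k e :
  (k < 3)%nat -> 0 <= M2 -> cube_partials x rho h H ->
  (forall q, cube x rho q -> Rabs (H k q - H k z') <= M2 * n1 (vsub q z')) ->
  cube x rho w -> Rabs (e - cmp x k) < rho ->
  (forall t, Rmin (cmp w k) e <= t <= Rmax (cmp w k) e -> n1 (vsub (setk w k t) z') <= N) ->
  Rabs (h (setk w k e) - h w - (e - cmp w k) * H k z') <= M2 * N * Rabs (e - cmp w k).
Proof.
  intros Hk HM2 Hd HH Hw He HN.
  assert (Hseg : forall t, Rmin (cmp w k) e <= t <= Rmax (cmp w k) e -> cube x rho (setk w k t)).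
  { intros t Ht. apply cube_setk; [exact Hk|exact Hw|].
    apply (between_Rabs_lt (cmp w k) e); [|exact He|exact Ht].
    destruct w as [[a b] c]. unfold cube in Hw; simpl in *.
    destruct k as [|[|[|k]]]; try lia; tauto. }
  rewrite <- (setk_cmp w k Hk) at 2.
  apply (mean_value_bound_affine (fun t => h (setk w k t)) (fun t => H k (setk w k t))).
  - intros t Ht. pose proof (Hd (setk w k t) k (Hseg t Ht) Hk) as Hder.
    rewrite cmp_setk in Hder by exact Hk.
    replace (fun t' => h (setk (setk w k t) k t')) with (fun t' => h (setk w k t')) in Hder
      by (apply functional_extensionality; intro; rewrite setk_setk; reflexivity).
    exact Hder.
  - intros t Ht. eapply Rle_trans; [apply HH, Hseg, Ht|].
    apply Rmult_le_compat_l; [exact HM2|exact (HN t Ht)].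
Qed.

Lemma cube_taylor2 x rho (h : V3 -> R) (H : nat -> V3 -> R) (H2 : nat -> nat -> V3 -> R) M2 :
  cube_partials x rho h H ->
  (forall k, (k < 3)%nat -> cube_partials x rho (H k) (H2 k)) ->
  (forall z k j, cube x rho z -> (k < 3)%nat -> (j < 3)%nat -> Rabs (H2 k j z) <= M2) ->
  forall z z', cube x rho z -> cube x rho z' ->
  Rabs (h z - h z' - (H 0%nat z' * (cmp z 0 - cmp z' 0) + H 1%nat z' * (cmp z 1 - cmp z' 1)
        + H 2%nat z' * (cmp z 2 - cmp z' 2))) <= M2 * n1 (vsub z z') * n1 (vsub z z').
Proof.
  intros Hd Hd2 Hb z z' Hz Hz'.
  assert (HH : forall k, (k < 3)%nat -> forall q, cube x rho q ->
            Rabs (H k q - H k z') <= M2 * n1 (vsub q z'))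
    by (intros k Hk q Hq; apply (cube_lipschitz x rho (H k) (H2 k)); auto).
  assert (HM2 : 0 <= M2)
    by (eapply Rle_trans; [apply Rabs_pos|apply (Hb z 0%nat 0%nat Hz); lia]).
  set (N := n1 (vsub z z')).
  destruct z as [[a b] c], z' as [[a' b'] c'].
  pose proof Hz as [Ha [Hb' Hc]]. pose proof Hz' as [Ha' [Hb'' Hc']].
  unfold N, n1, vsub in *; simpl in *.
  pose proof (Rabs_pos (a - a')); pose proof (Rabs_pos (b - b')); pose proof (Rabs_pos (c - c')).
  pose proof (cube_taylor_step x rho h H (a', b', c') M2 N (a', b', c') 0 a ltac:(lia) HM2 Hd
    (HH 0%nat ltac:(lia)) Hz' Ha) as S0.
  pose proof (cube_taylor_step x rho h H (a', b', c') M2 N (a, b', c') 1 b ltac:(lia) HM2 Hd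
    (HH 1%nat ltac:(lia)) ltac:(unfold cube; simpl; tauto) Hb') as S1.
  pose proof (cube_taylor_step x rho h H (a', b', c') M2 N (a, b, c') 2 c ltac:(lia) HM2 Hd
    (HH 2%nat ltac:(lia)) ltac:(unfold cube; simpl; tauto) Hc) as S2.
  simpl in S0, S1, S2.
  specialize (S0 ltac:(intros t Ht; pose proof (between_Rabs_le a' a t Ht); unfold N, n1, vsub; simpl;
    rewrite !Rminus_diag, Rabs_R0; lra)).
  specialize (S1 ltac:(intros t Ht; pose proof (between_Rabs_le b' b t Ht); unfold N, n1, vsub; simpl;
    rewrite Rminus_diag, Rabs_R0; lra)).
  specialize (S2 ltac:(intros t Ht; pose proof (between_Rabs_le c' c t Ht); unfold N, n1, vsub; simpl;
    lra)).
  set (e0 := h (a, b', c') - h (a', b', c') - (a - a') * H 0%nat (a', b', c')) in *.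
  set (e1 := h (a, b, c') - h (a, b', c') - (b - b') * H 1%nat (a', b', c')) in *.
  set (e2 := h (a, b, c) - h (a, b, c') - (c - c') * H 2%nat (a', b', c')) in *.
  replace (h (a, b, c) - h (a', b', c') - (H 0%nat (a', b', c') * (a - a')
     + H 1%nat (a', b', c') * (b - b') + H 2%nat (a', b', c') * (c - c')))
    with (e2 + e1 + e0) by (unfold e0, e1, e2; ring).
  pose proof (Rabs_triang (e2 + e1) e0). pose proof (Rabs_triang e2 e1). unfold N in S0, S1, S2. nra.
Qed.

(** * Eigenvalues of near-identity perturbations *)

Definition cnorm (z : nat -> C) : R := Cmod (z 0%nat) + Cmod (z 1%nat) + Cmod (z 2%nat).

Definition capply (M : nat -> nat -> C) (z : nat -> C) : nat -> C :=
  fun i => (M i 0%nat * z 0%nat + M i 1%nat * z 1%nat + M i 2%nat * z 2%nat)%C.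

Definition cdet3 (M : nat -> nat -> C) : C :=
  (M 0%nat 0%nat * (M 1%nat 1%nat * M 2%nat 2%nat - M 1%nat 2%nat * M 2%nat 1%nat)
 - M 0%nat 1%nat * (M 1%nat 0%nat * M 2%nat 2%nat - M 1%nat 2%nat * M 2%nat 0%nat)
 + M 0%nat 2%nat * (M 1%nat 0%nat * M 2%nat 1%nat - M 1%nat 1%nat * M 2%nat 0%nat))%C.

Definition next3 (i : nat) : nat := match i with 0%nat => 1%nat | 1%nat => 2%nat | _ => 0%nat end.

Definition cadj3 (M : nat -> nat -> C) (i j : nat) : C :=
  (M (next3 j) (next3 i) * M (next3 (next3 j)) (next3 (next3 i))
   - M (next3 j) (next3 (next3 i)) * M (next3 (next3 j)) (next3 i))%C.

Definition cshift (A : M3) (mu : C) (i j : nat) : C :=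
  if Nat.eqb i j then (RtoC (A i j) - mu)%C else RtoC (A i j).

(** Sum of the principal 2x2 minors, the linear coefficient of the characteristic polynomial. *)
Definition minor_sum (A : M3) : R :=
  A 0%nat 0%nat * A 1%nat 1%nat - A 0%nat 1%nat * A 1%nat 0%nat
  + A 0%nat 0%nat * A 2%nat 2%nat - A 0%nat 2%nat * A 2%nat 0%nat
  + A 1%nat 1%nat * A 2%nat 2%nat - A 1%nat 2%nat * A 2%nat 1%nat.

Lemma Cmod_le_Rabs_plus (c : C) : Cmod c <= Rabs (fst c) + Rabs (snd c).
Proof.
  destruct c as [x y]. unfold Cmod; cbn [fst snd].
  pose proof (Rabs_pos x); pose proof (Rabs_pos y).
  rewrite <- (sqrt_pow2 (Rabs x + Rabs y)) by lra.
  apply sqrt_le_1_alt. rewrite <- (pow2_abs x), <- (pow2_abs y). nra.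
Qed.

Lemma Rabs_le_Cmod (c : C) : Rabs (fst c) <= Cmod c /\ Rabs (snd c) <= Cmod c.
Proof.
  destruct c as [x y]. unfold Cmod; cbn [fst snd].
  split; rewrite <- sqrt_Rsqr_abs; apply sqrt_le_1_alt; unfold Rsqr; nra.
Qed.

Lemma cdet3_mul_entry (M : nat -> nat -> C) (z : nat -> C) k : (k < 3)%nat ->
  (cdet3 M * z k = cadj3 M k 0%nat * capply M z 0%nat + cadj3 M k 1%nat * capply M z 1%nat
                   + cadj3 M k 2%nat * capply M z 2%nat)%C.
Proof.
  intros Hk. destruct k as [|[|[|k]]]; try lia;
  cbv beta iota delta [cdet3 cadj3 capply next3]; ring.
Qed.

Lemma next3_lt i : (next3 i < 3)%nat.
Proof. destruct i as [|[|i]]; simpl; lia. Qed.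

Lemma Cmod_cadj3 (M : nat -> nat -> C) B i j :
  (forall i j, (i < 3)%nat -> (j < 3)%nat -> Cmod (M i j) <= B) -> Cmod (cadj3 M i j) <= 2 * B * B.
Proof.
  intros HB.
  assert (Hmul : forall p q p' q', Cmod (M (next3 p) (next3 q) * M (next3 p') (next3 q')) <= B * B).
  { intros. rewrite Cmod_mult. apply Rmult_le_compat; auto using Cmod_ge_0, next3_lt. }
  unfold cadj3, Cminus. eapply Rle_trans; [apply Cmod_triangle|].
  rewrite Cmod_opp. pose proof (Hmul j i (next3 j) (next3 i)).
  pose proof (Hmul j (next3 i) (next3 j) i). lra.
Qed.

(** Cramer's rule [det M z = adj M (M z)] bounds the determinant of [M] by how far [z]
    is from its kernel. *)
Lemma Cmod_cdet3_le (M : nat -> nat -> C) (z : nat -> C) B :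
  (forall i j, (i < 3)%nat -> (j < 3)%nat -> Cmod (M i j) <= B) ->
  Cmod (cdet3 M) * cnorm z <= 6 * B * B * cnorm (capply M z).
Proof.
  intros HB.
  assert (Hk : forall k, (k < 3)%nat -> Cmod (cdet3 M) * Cmod (z k) <= 2 * B * B * cnorm (capply M z)).
  { intros k Hk. rewrite <- Cmod_mult, cdet3_mul_entry by exact Hk.
    set (r := capply M z).
    pose proof (Cmod_triangle (cadj3 M k 0 * r 0%nat + cadj3 M k 1 * r 1%nat) (cadj3 M k 2 * r 2%nat)).
    pose proof (Cmod_triangle (cadj3 M k 0 * r 0%nat) (cadj3 M k 1 * r 1%nat)).
    rewrite !Cmod_mult in *.
    assert (Hterm : forall j, Cmod (cadj3 M k j) * Cmod (r j) <= 2 * B * B * Cmod (r j))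
      by (intros j; apply Rmult_le_compat_r; [apply Cmod_ge_0|apply Cmod_cadj3; exact HB]).
    pose proof (Hterm 0%nat); pose proof (Hterm 1%nat); pose proof (Hterm 2%nat).
    unfold cnorm. fold r. lra. }
  pose proof (Hk 0%nat ltac:(lia)); pose proof (Hk 1%nat ltac:(lia)); pose proof (Hk 2%nat ltac:(lia)).
  unfold cnorm at 1. lra.
Qed.

(** For traceless [A] the characteristic polynomial is [det A - minor_sum A mu - mu^3], whose
    real part on the imaginary axis is [det A]. *)
Lemma Re_cdet3_cshift (A : M3) (mu : C) :
  A 0%nat 0%nat + A 1%nat 1%nat + A 2%nat 2%nat = 0 ->
  Re (cdet3 (cshift A mu)) =
    det3 A + Re mu * (3 * (Im mu * Im mu) - Re mu * Re mu - minor_sum A).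
Proof.
  intros Htr. destruct mu as [al be].
  unfold cdet3, cshift, det3, minor_sum; simpl.
  replace (A 2%nat 2%nat) with (- A 0%nat 0%nat - A 1%nat 1%nat) by lra. ring.
Qed.

Lemma Cmod_cshift (A : M3) mu i j : (i < 3)%nat -> (j < 3)%nat ->
  Cmod (cshift A mu i j) <= mnorm A + Cmod mu.
Proof.
  intros Hi Hj. pose proof (mnorm_entry A i j Hi Hj). pose proof (Cmod_ge_0 mu).
  unfold cshift. destruct (Nat.eqb i j); rewrite ?Cmod_R; [|lra].
  unfold Cminus. eapply Rle_trans; [apply Cmod_triangle|]. rewrite Cmod_opp, Cmod_R. lra.
Qed.

Lemma Cmod_approx_eigenvalue (A : M3) mu z del : 0 < cnorm z ->
  cnorm (capply (cshift A mu) z) <= del * cnorm z -> Cmod mu <= mnorm A + del.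
Proof.
  intros Hz Hr. set (r := capply (cshift A mu) z) in *.
  assert (Hrow : forall i, (i < 3)%nat -> Cmod mu * Cmod (z i) <=
     (Rabs (A i 0%nat) + Rabs (A i 1%nat) + Rabs (A i 2%nat)) * cnorm z + Cmod (r i)).
  { intros i Hi.
    assert (E : (mu * z i = RtoC (A i 0%nat) * z 0%nat + RtoC (A i 1%nat) * z 1%nat
                            + RtoC (A i 2%nat) * z 2%nat - r i)%C).
    { unfold r, capply, cshift. destruct i as [|[|[|i]]]; try lia; cbn [Nat.eqb]; ring. }
    rewrite <- Cmod_mult, E. unfold Cminus.
    pose proof (Cmod_triangle (RtoC (A i 0%nat) * z 0%nat + RtoC (A i 1%nat) * z 1%nat
                               + RtoC (A i 2%nat) * z 2%nat) (- r i)).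
    pose proof (Cmod_triangle (RtoC (A i 0%nat) * z 0%nat + RtoC (A i 1%nat) * z 1%nat)
                              (RtoC (A i 2%nat) * z 2%nat)).
    pose proof (Cmod_triangle (RtoC (A i 0%nat) * z 0%nat) (RtoC (A i 1%nat) * z 1%nat)).
    rewrite Cmod_opp, !Cmod_mult, !Cmod_R in *.
    assert (Hj : forall j, (j < 3)%nat -> Rabs (A i j) * Cmod (z j) <= Rabs (A i j) * cnorm z).
    { intros j Hj. apply Rmult_le_compat_l; [apply Rabs_pos|]. unfold cnorm.
      pose proof (Cmod_ge_0 (z 0%nat)); pose proof (Cmod_ge_0 (z 1%nat));
      pose proof (Cmod_ge_0 (z 2%nat)).
      destruct j as [|[|[|j]]]; try lia; lra. }
    pose proof (Hj 0%nat ltac:(lia)); pose proof (Hj 1%nat ltac:(lia)); pose proof (Hj 2%nat ltac:(lia)).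
    lra. }
  pose proof (Hrow 0%nat ltac:(lia)); pose proof (Hrow 1%nat ltac:(lia)); pose proof (Hrow 2%nat ltac:(lia)).
  apply (Rmult_le_reg_r (cnorm z)); [exact Hz|].
  unfold mnorm, cnorm in *. lra.
Qed.

Lemma sqr_le_of_Rabs_le x r : Rabs x <= r -> x * x <= r * r.
Proof.
  intros Hx. pose proof (Rabs_pos x). pose proof (Rsqr_abs x) as Hsq. unfold Rsqr in Hsq.
  rewrite Hsq. apply Rmult_le_compat; lra.
Qed.

Lemma eigen_equation_residual (A J : M3) T eps a b u w : 0 < T ->
  (forall v, n1 (vsub (vsub (mapply J v) v) (vscal T (mapply A v))) <= eps * T * n1 v) ->
  mapply J u = vsub (vscal a u) (vscal b w) ->
  n1 (vsub (vadd (mapply A u) (vscal (b / T) w)) (vscal ((a - 1) / T) u)) <= eps * n1 u.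
Proof.
  intros HT HJ Hu.
  assert (E : vsub (vsub (mapply J u) u) (vscal T (mapply A u)) =
              vscal (- T) (vsub (vadd (mapply A u) (vscal (b / T) w)) (vscal ((a - 1) / T) u))).
  { rewrite Hu. unfold vsub, vadd, vscal, mapply, mrow; simpl.
    apply f_equal2; [apply f_equal2|]; field; lra. }
  specialize (HJ u). rewrite E, n1_scal, Rabs_Ropp, Rabs_pos_eq in HJ by lra.
  apply (Rmult_le_reg_l T); lra.
Qed.

(** A unit eigenvalue [a + i b] of [J = Id + T A + O(eps T)] gives an approximate
    eigenvalue [mu = ((a - 1) + i b) / T] of [A], with eigenvector [u + i w]; [|a + i b| = 1]
    forces [Re mu] to be of order [T]. *)
Lemma unit_eigenvalue_approx_eigenvector (A J : M3) T eps : 0 < T -> 0 <= eps ->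
  (forall v, n1 (vsub (vsub (mapply J v) v) (vscal T (mapply A v))) <= eps * T * n1 v) ->
  has_unit_eigenvalue J ->
  exists mu z, 0 < cnorm z /\ cnorm (capply (cshift A mu) z) <= 2 * eps * cnorm z /\
    Re mu = - T * (Cmod mu * Cmod mu) / 2.
Proof.
  intros HT Heps HJ [a [b [u [w [Hab [Hnz [Hu Hw]]]]]]].
  set (al := (a - 1) / T). set (be := b / T).
  set (z := fun k => (cmp u k, cmp w k) : C).
  set (ru := vsub (vadd (mapply A u) (vscal be w)) (vscal al u)).
  set (rw := vsub (vadd (mapply A w) (vscal (- b / T) u)) (vscal al w)).
  assert (Hru : n1 ru <= eps * n1 u) by exact (eigen_equation_residual A J T eps a b u w HT HJ Hu).
  assert (Hrw : n1 rw <= eps * n1 w).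
  { apply (eigen_equation_residual A J T eps a (- b) w u HT HJ).
    rewrite Hw. unfold vsub, vadd, vscal; simpl. vec_ring. }
  assert (Hres : forall i, (i < 3)%nat -> capply (cshift A (al, be)) z i = (cmp ru i, cmp rw i)).
  { intros i Hi. unfold capply, cshift, z, ru, rw, al, be, vsub, vadd, vscal, mapply, mrow.
    destruct i as [|[|[|i]]]; try lia; cbn [Nat.eqb cmp];
    unfold Cminus, Cplus, Cmult, Copp, RtoC; simpl; f_equal; field; lra. }
  assert (Huz : n1 u <= cnorm z /\ n1 w <= cnorm z).
  { unfold n1, cnorm, z.
    destruct (Rabs_le_Cmod (cmp u 0, cmp w 0)), (Rabs_le_Cmod (cmp u 1, cmp w 1)),
      (Rabs_le_Cmod (cmp u 2, cmp w 2)). simpl in *. lra. }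
  exists (al, be), z. split; [|split].
  - destruct Hnz as [Hn|Hn]; apply n1_pos in Hn; lra.
  - unfold cnorm at 1. rewrite !Hres by lia.
    pose proof (Cmod_le_Rabs_plus (cmp ru 0, cmp rw 0));
    pose proof (Cmod_le_Rabs_plus (cmp ru 1, cmp rw 1));
    pose proof (Cmod_le_Rabs_plus (cmp ru 2, cmp rw 2)). unfold n1 in *; simpl in *. nra.
  - assert (Hmod : Cmod (al, be) * Cmod (al, be) = al * al + be * be).
    { unfold Cmod; cbn [fst snd]. rewrite sqrt_sqrt; [ring|nra]. }
    assert (Ha : a = 1 + T * al) by (unfold al; field; lra).
    assert (Hb : b = T * be) by (unfold be; field; lra).
    rewrite Ha, Hb in Hab. rewrite Hmod. simpl. apply (Rmult_eq_reg_l (2 * T)); [|lra].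
    replace (2 * T * (- T * (al * al + be * be) / 2)) with (- T * T * (al * al + be * be)) by field.
    nra.
Qed.

Lemma Cmod_cdet3_cshift_le (A : M3) mu z del : 0 < cnorm z ->
  cnorm (capply (cshift A mu) z) <= del * cnorm z ->
  Cmod (cdet3 (cshift A mu)) <= 6 * (mnorm A + Cmod mu) * (mnorm A + Cmod mu) * del.
Proof.
  intros Hz Hr. set (B := mnorm A + Cmod mu).
  assert (HB : 0 <= 6 * B * B) by (unfold B; pose proof (mnorm_ge0 A); pose proof (Cmod_ge_0 mu); nra).
  assert (Hcr : Cmod (cdet3 (cshift A mu)) * cnorm z <= 6 * B * B * (del * cnorm z)).
  { eapply Rle_trans; [apply (Cmod_cdet3_le _ _ B)|apply Rmult_le_compat_l; assumption].
    intros i j Hi Hj. apply Cmod_cshift; assumption. }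
  apply (Rmult_le_reg_r (cnorm z)); [exact Hz|]. lra.
Qed.

Lemma Rabs_det3_le_cshift (A : M3) mu : A 0%nat 0%nat + A 1%nat 1%nat + A 2%nat 2%nat = 0 ->
  Rabs (det3 A) <= Cmod (cdet3 (cshift A mu))
                   + Rabs (Re mu) * (3 * (Cmod mu * Cmod mu) + Rabs (minor_sum A)).
Proof.
  intros Htr. pose proof (Re_cdet3_cshift A mu Htr) as E.
  set (q := 3 * (Im mu * Im mu) - Re mu * Re mu - minor_sum A) in E.
  assert (Hq : Rabs q <= 3 * (Cmod mu * Cmod mu) + Rabs (minor_sum A)).
  { destruct (Rabs_le_Cmod mu) as [Hr1 Hr2].
    pose proof (sqr_le_of_Rabs_le (fst mu) (Cmod mu) Hr1).
    pose proof (sqr_le_of_Rabs_le (snd mu) (Cmod mu) Hr2).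
    pose proof (Rle_0_sqr (fst mu)); pose proof (Rle_0_sqr (snd mu)). unfold Rsqr in *.
    pose proof (Rle_abs (minor_sum A)); pose proof (Rle_abs (- minor_sum A)).
    rewrite Rabs_Ropp in *. apply Rabs_le. unfold q, Re, Im. lra. }
  replace (det3 A) with (Re (cdet3 (cshift A mu)) - Re mu * q) by lra.
  pose proof (Rabs_triang (Re (cdet3 (cshift A mu))) (- (Re mu * q))) as Htri.
  rewrite Rabs_Ropp, Rabs_mult in Htri. pose proof (re_le_Cmod (cdet3 (cshift A mu))).
  assert (Rabs (Re mu) * Rabs q <= Rabs (Re mu) * (3 * (Cmod mu * Cmod mu) + Rabs (minor_sum A)))
    by (apply Rmult_le_compat_l; [apply Rabs_pos|exact Hq]).
  unfold Rminus. lra.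
Qed.

(** Since [A] is traceless and invertible, [A - mu] stays invertible for [mu] near the
    imaginary axis; but a unit eigenvalue of [J] yields such a [mu] which is an approximate
    eigenvalue of [A]. *)
Lemma near_identity_no_unit_eigenvalue (A : M3) :
  A 0%nat 0%nat + A 1%nat 1%nat + A 2%nat 2%nat = 0 -> det3 A <> 0 ->
  exists eps T2, 0 < eps /\ 0 < T2 /\ forall T J, 0 < T < T2 ->
   (forall v, n1 (vsub (vsub (mapply J v) v) (vscal T (mapply A v))) <= eps * T * n1 v) ->
   ~ has_unit_eigenvalue J.
Proof.
  intros Htr Hdet.
  set (K := mnorm A). set (Rm := K + 2). set (c := Rabs (minor_sum A)). set (d := Rabs (det3 A)).
  assert (HK : 0 <= K) by apply mnorm_ge0.
  assert (Hc : 0 <= c) by apply Rabs_pos.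
  assert (Hd : 0 < d) by (apply Rabs_pos_lt; exact Hdet).
  set (C := Rm * Rm * (3 * Rm * Rm + c) + 1).
  assert (HC : 0 < C) by (unfold C, Rm; nra).
  set (eps := Rmin 1 (d / (24 * (K + Rm) * (K + Rm)))).
  assert (Heps : 0 < eps) by (apply Rmin_pos; [lra|apply Rdiv_lt_0_compat; unfold Rm; nra]).
  assert (Heps1 : eps <= 1) by apply Rmin_l.
  assert (Heps2 : 24 * (K + Rm) * (K + Rm) * eps <= d).
  { assert (eps <= d / (24 * (K + Rm) * (K + Rm))) by apply Rmin_r.
    assert (d / (24 * (K + Rm) * (K + Rm)) * (24 * (K + Rm) * (K + Rm)) = d)
      by (field; unfold Rm; nra).
    unfold Rm in *. nra. }
  exists eps, (d / C). split; [exact Heps|]. split; [apply Rdiv_lt_0_compat; lra|].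
  intros T J [HT0 HT1] HJ Heig.
  assert (HT : T * C < d) by (assert (d / C * C = d) by (field; lra); nra).
  destruct (unit_eigenvalue_approx_eigenvector A J T eps HT0 ltac:(lra) HJ Heig)
    as [mu [z [Hz [Hr Hre]]]].
  pose proof (Cmod_ge_0 mu) as Hmu0.
  assert (Hmu : Cmod mu <= Rm)
    by (pose proof (Cmod_approx_eigenvalue A mu z (2 * eps) Hz Hr); unfold Rm, K in *; lra).
  assert (Hdet_small : Cmod (cdet3 (cshift A mu)) <= d / 2).
  { pose proof (Cmod_cdet3_cshift_le A mu z (2 * eps) Hz Hr) as Hcd. fold K in Hcd.
    assert ((K + Cmod mu) * (K + Cmod mu) <= (K + Rm) * (K + Rm)) by (apply Rmult_le_compat; lra).
    nra. }
  assert (Hre_mu : Rabs (Re mu) <= T * (Rm * Rm) / 2).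
  { rewrite Hre, Rabs_left1; [|nra].
    assert (Cmod mu * Cmod mu <= Rm * Rm) by (apply Rmult_le_compat; lra). nra. }
  pose proof (Rabs_det3_le_cshift A mu Htr) as Hdet_le. fold d c in Hdet_le.
  assert (Cmod mu * Cmod mu <= Rm * Rm) by (apply Rmult_le_compat; lra).
  assert (Rabs (Re mu) * (3 * (Cmod mu * Cmod mu) + c) <= T * (Rm * Rm) / 2 * (3 * (Rm * Rm) + c))
    by (apply Rmult_le_compat; [apply Rabs_pos|nra|exact Hre_mu|lra]).
  unfold C in HT. nra.
Qed.

(** * Local bounds for a [C^3] field *)

Lemma partial_setk (g : R -> V3 -> R) k s z l : (k < 3)%nat -> partial g (S k) s z l ->
  derivable_pt_lim (fun t => g s (setk z k t)) (cmp z k) l.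
Proof.
  intros Hk Hp eps He. destruct (Hp eps He) as [del Hd]. exists del. intros h Hh Hh2.
  specialize (Hd h Hh Hh2). destruct z as [[a b] c].
  destruct k as [|[|[|k]]]; try lia; unfold shift, vadd in Hd; simpl in *;
    rewrite !Rplus_0_r, Rplus_0_l in *; exact Hd.
Qed.

Definition near (t0 : R) (x : V3) (P : R -> V3 -> Prop) : Prop :=
  exists r, 0 < r /\ forall s z, Rabs (s - t0) + n1 (vsub z x) < r -> P s z.

Lemma near_and t0 x P Q : near t0 x P -> near t0 x Q -> near t0 x (fun s z => P s z /\ Q s z).
Proof.
  intros [r1 [H1 P1]] [r2 [H2 P2]]. exists (Rmin r1 r2). split; [apply Rmin_pos; lra|].
  intros s z Hd. pose proof (Rmin_l r1 r2); pose proof (Rmin_r r1 r2).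
  split; [apply P1|apply P2]; lra.
Qed.

Lemma near_forall_lt t0 x (P : nat -> R -> V3 -> Prop) n :
  (forall i, (i < n)%nat -> near t0 x (P i)) -> near t0 x (fun s z => forall i, (i < n)%nat -> P i s z).
Proof.
  induction n as [|n IH]; intros H.
  - exists 1; split; [lra|]. intros s z _ i Hi; lia.
  - destruct (near_and _ _ _ _ (IH (fun i Hi => H i ltac:(lia))) (H n ltac:(lia))) as [r [Hr Hp]].
    exists r; split; [exact Hr|]. intros s z Hd i Hi. destruct (Hp s z Hd) as [Hlt Hn].
    destruct (Nat.eq_dec i n) as [->|Hne]; [exact Hn|apply Hlt; lia].
Qed.

Lemma near_cont_on D t0 x (g : R -> V3 -> R) : open_domain D -> D t0 x -> cont_on D g ->
  forall eps, 0 < eps -> near t0 x (fun s z => Rabs (g s z - g t0 x) < eps).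
Proof.
  intros Ho Hx Hc eps He. destruct (Ho t0 x Hx) as [r [Hr Hr2]].
  destruct (Hc t0 x Hx eps He) as [del [Hdel Hd]].
  exists (Rmin r del). split; [apply Rmin_pos; lra|]. intros s z Hsz.
  pose proof (Rmin_l r del); pose proof (Rmin_r r del). apply Hd; [apply Hr2|]; lra.
Qed.

Lemma near_domain D t0 x : open_domain D -> D t0 x -> near t0 x D.
Proof. intros Ho Hx. destruct (Ho t0 x Hx) as [r [Hr Hr2]]. exists r; split; auto. Qed.

Definition max3 (g : nat -> R) : R := Rmax (g 0%nat) (Rmax (g 1%nat) (g 2%nat)).

Lemma max3_ge g i : (i < 3)%nat -> g i <= max3 g.
Proof.
  intros Hi. unfold max3. pose proof (Rmax_l (g 0%nat) (Rmax (g 1%nat) (g 2%nat))).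
  pose proof (Rmax_r (g 0%nat) (Rmax (g 1%nat) (g 2%nat))).
  pose proof (Rmax_l (g 1%nat) (g 2%nat)); pose proof (Rmax_r (g 1%nat) (g 2%nat)).
  destruct i as [|[|[|i]]]; try lia; lra.
Qed.

Lemma C3_field_second_partials D f : C3_field D f ->
  exists (G : nat -> nat -> R -> V3 -> R) (H : nat -> nat -> nat -> R -> V3 -> R),
    (forall i k, (i < 3)%nat -> (k < 3)%nat ->
       (forall t y, D t y -> partial (fc f i) (S k) t y (G i k t y)) /\ cont_on D (G i k)) /\
    (forall i k j, (i < 3)%nat -> (k < 3)%nat -> (j < 3)%nat ->
       (forall t y, D t y -> partial (G i k) (S j) t y (H i k j t y)) /\ cont_on D (H i k j)).
Proof.
  intros Hf.
  assert (HG : forall i k, exists g, (i < 3)%nat -> (k < 3)%nat ->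
     (forall t y, D t y -> partial (fc f i) (S k) t y (g t y)) /\ Ck 2 D g).
  { intros i k. destruct (Compare_dec.lt_dec i 3) as [Hi|Hi]; [|exists (fun _ _ => 0); intros; lia].
    destruct (Compare_dec.lt_dec k 3) as [Hk|Hk]; [|exists (fun _ _ => 0); intros; lia].
    destruct (Hf i Hi) as [_ Hd]. destruct (Hd (S k) ltac:(lia)) as [g [Hg Hck]].
    exists g. intros; split; assumption. }
  set (G := fun i k => proj1_sig (constructive_indefinite_description _ (HG i k))).
  assert (HGs : forall i k, (i < 3)%nat -> (k < 3)%nat ->
     (forall t y, D t y -> partial (fc f i) (S k) t y (G i k t y)) /\ Ck 2 D (G i k))
    by (intros i k; exact (proj2_sig (constructive_indefinite_description _ (HG i k)))).
  assert (HH : forall i k j, exists h, (i < 3)%nat -> (k < 3)%nat -> (j < 3)%nat ->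
     (forall t y, D t y -> partial (G i k) (S j) t y (h t y)) /\ cont_on D h).
  { intros i k j. destruct (Compare_dec.lt_dec i 3) as [Hi|Hi]; [|exists (fun _ _ => 0); intros; lia].
    destruct (Compare_dec.lt_dec k 3) as [Hk|Hk]; [|exists (fun _ _ => 0); intros; lia].
    destruct (Compare_dec.lt_dec j 3) as [Hj|Hj]; [|exists (fun _ _ => 0); intros; lia].
    destruct (HGs i k Hi Hk) as [_ [_ Hd]]. destruct (Hd (S j) ltac:(lia)) as [h [Hh [Hc _]]].
    exists h. intros; split; assumption. }
  exists G, (fun i k j => proj1_sig (constructive_indefinite_description _ (HH i k j))).
  split.
  - intros i k Hi Hk. destruct (HGs i k Hi Hk) as [Hp [Hc _]]. split; assumption.
  - intros i k j. exact (proj2_sig (constructive_indefinite_description _ (HH i k j))).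
Qed.

Definition local_bounds (f : R -> V3 -> V3) (t0 : R) (x : V3) (A : M3) (rho : R)
  (G : nat -> nat -> R -> V3 -> R) (H : nat -> nat -> nat -> R -> V3 -> R) (M2 Fb e1 : R) : Prop :=
  forall s z, Rabs (s - t0) < rho -> cube x rho z ->
   (forall i k, (i < 3)%nat -> (k < 3)%nat -> partial (fc f i) (S k) s z (G i k s z)) /\
   (forall i k j, (i < 3)%nat -> (k < 3)%nat -> (j < 3)%nat -> partial (G i k) (S j) s z (H i k j s z)) /\
   (forall i k j, (i < 3)%nat -> (k < 3)%nat -> (j < 3)%nat -> Rabs (H i k j s z) <= M2) /\
   (forall i k, (i < 3)%nat -> (k < 3)%nat -> Rabs (G i k s z - A i k) <= e1) /\
   (forall i, (i < 3)%nat -> Rabs (fc f i s z) <= Fb).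

Lemma cube_dist x rho s t0 z : Rabs (s - t0) < rho -> cube x rho z ->
  Rabs (s - t0) + n1 (vsub z x) < 4 * rho.
Proof. intros Hs [Hz0 [Hz1 Hz2]]. unfold n1, vsub; simpl. lra. Qed.

Lemma local_bounds_exist D f t0 x A :
  open_domain D -> C3_field D f -> D t0 x -> spatial_jacobian f t0 x A ->
  forall e1, 0 < e1 -> exists rho G H M2 Fb, 0 < rho /\ local_bounds f t0 x A rho G H M2 Fb e1.
Proof.
  intros Ho Hf Hx HA e1 He1.
  destruct (C3_field_second_partials D f Hf) as [G [H [HG HH]]].
  assert (HGA : forall i k, (i < 3)%nat -> (k < 3)%nat -> G i k t0 x = A i k)
    by (intros i k Hi Hk; exact (uniqueness_limite _ _ _ _ (proj1 (HG i k Hi Hk) t0 x Hx) (HA i k Hi Hk))).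
  set (M2 := max3 (fun i => max3 (fun k => max3 (fun j => Rabs (H i k j t0 x) + 1)))).
  set (Fb := max3 (fun i => Rabs (fc f i t0 x) + 1)).
  assert (Hnear : near t0 x (fun s z => D s z /\
     (forall i, (i < 3)%nat -> forall k, (k < 3)%nat -> forall j, (j < 3)%nat ->
        Rabs (H i k j s z - H i k j t0 x) < 1) /\
     (forall i, (i < 3)%nat -> forall k, (k < 3)%nat -> Rabs (G i k s z - G i k t0 x) < e1) /\
     (forall i, (i < 3)%nat -> Rabs (fc f i s z - fc f i t0 x) < 1))).
  { repeat apply near_and.
    - apply near_domain; assumption.
    - do 3 (apply near_forall_lt; intros ? ?). apply (near_cont_on D); [..|lra]; auto.
      apply HH; assumption.
    - do 2 (apply near_forall_lt; intros ? ?). apply (near_cont_on D); auto. apply HG; assumption.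
    - apply near_forall_lt; intros i Hi. apply (near_cont_on D); [..|lra]; auto. apply Hf; exact Hi. }
  destruct Hnear as [r [Hr Hn]].
  exists (r / 4), G, H, M2, Fb. split; [lra|].
  intros s z Hs Hz.
  destruct (Hn s z ltac:(pose proof (cube_dist x (r / 4) s t0 z Hs Hz); lra)) as [HD [HHnear [HGnear Hfnear]]].
  split; [|split; [|split; [|split]]].
  - intros i k Hi Hk. apply (HG i k Hi Hk); exact HD.
  - intros i k j Hi Hk Hj. apply (HH i k j Hi Hk Hj); exact HD.
  - intros i k j Hi Hk Hj. specialize (HHnear i Hi k Hk j Hj).
    pose proof (Rabs_triang_inv (H i k j s z) (H i k j t0 x)).
    pose proof (max3_ge (fun j => Rabs (H i k j t0 x) + 1) j Hj).
    pose proof (max3_ge (fun k => max3 (fun j => Rabs (H i k j t0 x) + 1)) k Hk).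
    pose proof (max3_ge (fun i => max3 (fun k => max3 (fun j => Rabs (H i k j t0 x) + 1))) i Hi).
    unfold M2. simpl in *. lra.
  - intros i k Hi Hk. rewrite <- HGA by assumption. left. apply HGnear; assumption.
  - intros i Hi. specialize (Hfnear i Hi).
    pose proof (Rabs_triang_inv (fc f i s z) (fc f i t0 x)).
    pose proof (max3_ge (fun i => Rabs (fc f i t0 x) + 1) i Hi). unfold Fb. simpl in *. lra.
Qed.

(** * Flow estimates *)

Lemma derivable_pt_lim_affine a b t : derivable_pt_lim (fun s => a * s + b) t a.
Proof.
  pose proof (derivable_pt_lim_plus (fun s => a * s) (fct_cte b) t a 0) as H.
  unfold plus_fct, fct_cte in H. rewrite Rplus_0_r in H. apply H; [|apply derivable_pt_lim_const].
  pose proof (derivable_pt_lim_scal id a t 1 (derivable_pt_lim_id t)) as Hs.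
  rewrite Rmult_1_r in Hs. exact Hs.
Qed.

Lemma mrow_setk_deriv (A : M3) i z k : (k < 3)%nat ->
  derivable_pt_lim (fun t => mrow A i (setk z k t)) (cmp z k) (A i k).
Proof.
  intros Hk. destruct z as [[a b] c]. unfold mrow.
  destruct k as [|[|[|k]]]; try lia; simpl;
  [ replace (fun t => A i 0%nat * t + A i 1%nat * b + A i 2%nat * c)
      with (fun t => A i 0%nat * t + (A i 1%nat * b + A i 2%nat * c))
  | replace (fun t => A i 0%nat * a + A i 1%nat * t + A i 2%nat * c)
      with (fun t => A i 1%nat * t + (A i 0%nat * a + A i 2%nat * c))
  | replace (fun t => A i 0%nat * a + A i 1%nat * b + A i 2%nat * t)
      with (fun t => A i 2%nat * t + (A i 0%nat * a + A i 1%nat * b)) ];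
  try (apply functional_extensionality; intro; ring); apply derivable_pt_lim_affine.
Qed.

Section FlowEstimates.

Variables (f : R -> V3 -> V3) (phi : R -> R -> V3 -> V3) (t0 : R) (x : V3) (A : M3)
  (rho : R) (G : nat -> nat -> R -> V3 -> R) (H : nat -> nat -> nat -> R -> V3 -> R)
  (M2 Fb e1 del r : R).
Hypothesis Hbounds : local_bounds f t0 x A rho G H M2 Fb e1.
Hypothesis Hrho : 0 < rho.
Hypothesis Hdel : 0 < del.
Hypothesis Hr : 0 < r.
Hypothesis He1 : 0 < e1.
Hypothesis Hflow : forall y, n1 (vsub y x) < r -> phi t0 t0 y = y /\
  forall tau, t0 - del < tau < t0 + del -> is_vderiv (fun s => phi s t0 y) tau (f tau (phi tau t0 y)).

(** [LL] bounds the spatial Lipschitz constant of [f] for [n1] near [(t0, x)]; [Y <= r] keeps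
    initial data where the flow is given and [Y <= rho / 2] leaves room in the cube. *)
Definition LL : R := 9 * (mnorm A + e1).
Definition Y : R := Rmin r (rho / 2).
Definition Gm (s : R) (z : V3) : M3 := fun i k => G i k s z.

Lemma Y_pos : 0 < Y.
Proof. apply Rmin_pos; lra. Qed.

Lemma Y_le_r : Y <= r.
Proof. apply Rmin_l. Qed.

Lemma Y_le_rho : Y <= rho / 2.
Proof. apply Rmin_r. Qed.

Lemma local_bounds_center : Rabs (t0 - t0) < rho /\ cube x rho x.
Proof. rewrite Rminus_diag, Rabs_R0. split; [lra|apply cube_center; lra]. Qed.

Lemma M2_ge0 : 0 <= M2.
Proof.
  destruct local_bounds_center as [Hs Hz].
  destruct (Hbounds t0 x Hs Hz) as [_ [_ [P _]]].
  specialize (P 0%nat 0%nat 0%nat ltac:(lia) ltac:(lia) ltac:(lia)).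
  pose proof (Rabs_pos (H 0%nat 0%nat 0%nat t0 x)). lra.
Qed.

Lemma Fb_ge0 : 0 <= Fb.
Proof.
  destruct local_bounds_center as [Hs Hz].
  destruct (Hbounds t0 x Hs Hz) as [_ [_ [_ [_ P]]]].
  specialize (P 0%nat ltac:(lia)). pose proof (Rabs_pos (fc f 0 t0 x)). lra.
Qed.

Lemma LL_ge0 : 0 <= LL.
Proof. unfold LL. pose proof (mnorm_ge0 A). lra. Qed.

Lemma G_entry_bound s z i k : Rabs (s - t0) < rho -> cube x rho z -> (i < 3)%nat -> (k < 3)%nat ->
  Rabs (G i k s z) <= mnorm A + e1.
Proof.
  intros Hs Hz Hi Hk. destruct (Hbounds s z Hs Hz) as [_ [_ [_ [P _]]]].
  specialize (P i k Hi Hk). pose proof (mnorm_entry A i k Hi Hk).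
  pose proof (Rabs_triang (G i k s z - A i k) (A i k)).
  replace (G i k s z - A i k + A i k) with (G i k s z) in * by ring. lra.
Qed.

Lemma mnorm_Gm s z : Rabs (s - t0) < rho -> cube x rho z -> mnorm (Gm s z) <= LL.
Proof.
  intros Hs Hz. unfold mnorm, Gm, LL.
  pose proof (fun i k => G_entry_bound s z i k Hs Hz) as HG.
  pose proof (HG 0%nat 0%nat ltac:(lia) ltac:(lia)); pose proof (HG 0%nat 1%nat ltac:(lia) ltac:(lia));
  pose proof (HG 0%nat 2%nat ltac:(lia) ltac:(lia)); pose proof (HG 1%nat 0%nat ltac:(lia) ltac:(lia));
  pose proof (HG 1%nat 1%nat ltac:(lia) ltac:(lia)); pose proof (HG 1%nat 2%nat ltac:(lia) ltac:(lia));
  pose proof (HG 2%nat 0%nat ltac:(lia) ltac:(lia)); pose proof (HG 2%nat 1%nat ltac:(lia) ltac:(lia));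
  pose proof (HG 2%nat 2%nat ltac:(lia) ltac:(lia)). lra.
Qed.

Lemma cube_partials_f s i : Rabs (s - t0) < rho -> (i < 3)%nat ->
  cube_partials x rho (fc f i s) (fun k => G i k s).
Proof.
  intros Hs Hi z k Hz Hk. apply partial_setk; [exact Hk|].
  destruct (Hbounds s z Hs Hz) as [P _]. apply P; assumption.
Qed.

Lemma cube_partials_G s i k : Rabs (s - t0) < rho -> (i < 3)%nat -> (k < 3)%nat ->
  cube_partials x rho (G i k s) (fun j => H i k j s).
Proof.
  intros Hs Hi Hk z j Hz Hj. apply partial_setk; [exact Hj|].
  destruct (Hbounds s z Hs Hz) as [_ [P _]]. apply P; assumption.
Qed.

Lemma n1_f_bound s z : Rabs (s - t0) < rho -> cube x rho z -> n1 (f s z) <= 3 * Fb.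
Proof.
  intros Hs Hz. destruct (Hbounds s z Hs Hz) as [_ [_ [_ [_ P]]]].
  unfold n1. pose proof (P 0%nat ltac:(lia)); pose proof (P 1%nat ltac:(lia));
  pose proof (P 2%nat ltac:(lia)). unfold fc in *. lra.
Qed.

Lemma f_lipschitz s z z' : Rabs (s - t0) < rho -> cube x rho z -> cube x rho z' ->
  n1 (vsub (f s z) (f s z')) <= LL * n1 (vsub z z').
Proof.
  intros Hs Hz Hz'.
  assert (Hi : forall i, (i < 3)%nat ->
            Rabs (fc f i s z - fc f i s z') <= (mnorm A + e1) * n1 (vsub z z')).
  { intros i Hi. apply (cube_lipschitz x rho (fc f i s) (fun k => G i k s)); auto.
    - apply cube_partials_f; auto.
    - intros w k Hw Hk. apply G_entry_bound; auto. }
  pose proof (Hi 0%nat ltac:(lia)); pose proof (Hi 1%nat ltac:(lia)); pose proof (Hi 2%nat ltac:(lia)).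
  unfold fc in *. unfold n1 at 1, vsub at 1. simpl.
  pose proof (n1_ge0 (vsub z z')). pose proof (mnorm_ge0 A). unfold LL. nra.
Qed.

Lemma f_taylor2 s z z' : Rabs (s - t0) < rho -> cube x rho z -> cube x rho z' ->
  n1 (vsub (vsub (f s z) (f s z')) (mapply (Gm s z') (vsub z z')))
    <= 3 * M2 * (n1 (vsub z z') * n1 (vsub z z')).
Proof.
  intros Hs Hz Hz'.
  assert (Hi : forall i, (i < 3)%nat -> Rabs (fc f i s z - fc f i s z' -
     (G i 0%nat s z' * (cmp z 0 - cmp z' 0) + G i 1%nat s z' * (cmp z 1 - cmp z' 1)
      + G i 2%nat s z' * (cmp z 2 - cmp z' 2))) <= M2 * n1 (vsub z z') * n1 (vsub z z')).
  { intros i Hi. apply (cube_taylor2 x rho (fc f i s) (fun k => G i k s) (fun k j => H i k j s)); auto.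
    - apply cube_partials_f; auto.
    - intros k Hk. apply cube_partials_G; auto.
    - intros w k j Hw Hk Hj. destruct (Hbounds s w Hs Hw) as [_ [_ [P _]]]. apply P; auto. }
  pose proof (Hi 0%nat ltac:(lia)); pose proof (Hi 1%nat ltac:(lia)); pose proof (Hi 2%nat ltac:(lia)).
  unfold fc, Gm in *. unfold n1 at 1, vsub at 1 2, mapply, mrow. simpl. lra.
Qed.

Lemma f_near_linear s z z' : Rabs (s - t0) < rho -> cube x rho z -> cube x rho z' ->
  n1 (vsub (vsub (f s z) (f s z')) (mapply A (vsub z z'))) <= 3 * e1 * n1 (vsub z z').
Proof.
  intros Hs Hz Hz'.
  assert (Hi : forall i, (i < 3)%nat ->
     Rabs ((fc f i s z - mrow A i z) - (fc f i s z' - mrow A i z')) <= e1 * n1 (vsub z z')).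
  { intros i Hi.
    apply (cube_lipschitz x rho (fun w => fc f i s w - mrow A i w) (fun k w => G i k s w - A i k)); auto.
    - intros w k Hw Hk.
      apply (derivable_pt_lim_minus (fun t => fc f i s (setk w k t)) (fun t => mrow A i (setk w k t))).
      + exact (cube_partials_f s i Hs Hi w k Hw Hk).
      + apply mrow_setk_deriv; exact Hk.
    - intros w k Hw Hk. destruct (Hbounds s w Hs Hw) as [_ [_ [_ [P _]]]]. apply P; auto. }
  pose proof (Hi 0%nat ltac:(lia)); pose proof (Hi 1%nat ltac:(lia)); pose proof (Hi 2%nat ltac:(lia)).
  unfold fc, mrow in *. unfold n1 at 1, vsub at 1 2, mapply, mrow. simpl.
  repeat match goal with
  | |- context [Rabs (cmp (f s z) ?i - cmp (f s z') ?i - ?l)] =>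
      replace (cmp (f s z) i - cmp (f s z') i - l) with
        (cmp (f s z) i - mrow A i z - (cmp (f s z') i - mrow A i z'))
        by (unfold mrow, vsub; simpl; ring)
  end.
  unfold mrow. lra.
Qed.

Definition admissible_time (T : R) : Prop :=
  0 < T /\ T < del /\ T < rho /\ 6 * Fb * T < rho / 2 /\ LL * T <= 1/4.

(** Trajectories from [Y]-close initial data stay in the cube up to admissible times,
    since [|f| <= 3 Fb] there. *)
Lemma flow_in_cube T : admissible_time T -> forall y, n1 (vsub y x) < Y ->
  forall tau, t0 <= tau <= t0 + T -> Rabs (tau - t0) < rho /\ cube x rho (phi tau t0 y).
Proof.
  intros HT y Hy tau Htau. pose proof HT as [HT0 [HTd [HTr [HTF HTL]]]].
  pose proof Y_le_r. pose proof Y_le_rho. pose proof Fb_ge0.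
  destruct (Hflow y ltac:(lra)) as [Hinit Hder].
  assert (Hmove : n1 (vsub (phi tau t0 y) y) <= 0 + 2 * (0 * 0 + 3 * Fb) * (tau - t0)).
  { apply (gronwall_vderiv (fun s => vsub (phi s t0 y) y) (fun s => vsub (f s (phi s t0 y)) v0)
             t0 (t0 + T) 0 (3 * Fb) 0 (rho / 2)); try lra.
    - intros s Hs. apply is_vderiv_vsub; [apply Hder; lra|apply is_vderiv_const].
    - rewrite Hinit, vsub_diag, n1_v0. lra.
    - intros s Hs Hsm. rewrite n1_vsub_v0. apply Rle_trans with (3 * Fb); [|lra].
      apply n1_f_bound; [apply Rabs_def1; lra|]. apply n1_lt_cube.
      pose proof (n1_vsub_triangle (phi s t0 y) y x). lra. }
  split; [apply Rabs_def1; lra|]. apply n1_lt_cube.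
  pose proof (n1_vsub_triangle (phi tau t0 y) y x).
  assert (Fb * (tau - t0) <= Fb * T) by (apply Rmult_le_compat_l; lra). lra.
Qed.

Definition flow_diff (h : V3) (tau : R) : V3 := vsub (phi tau t0 (vadd x h)) (phi tau t0 x).
Definition field_diff (h : V3) (tau : R) : V3 :=
  vsub (f tau (phi tau t0 (vadd x h))) (f tau (phi tau t0 x)).

Lemma center_close : n1 (vsub x x) < Y.
Proof. rewrite vsub_diag, n1_v0. exact Y_pos. Qed.

Lemma shifted_close h : n1 h < Y -> n1 (vsub (vadd x h) x) < Y.
Proof. intros Hh. rewrite vadd_vsub_l. exact Hh. Qed.

Lemma flow_diff_deriv h tau : n1 h < Y -> t0 - del < tau < t0 + del ->
  is_vderiv (flow_diff h) tau (field_diff h tau).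
Proof.
  intros Hh Ht. pose proof Y_le_r. pose proof (shifted_close h Hh). pose proof center_close.
  apply is_vderiv_vsub;
    [apply (proj2 (Hflow (vadd x h) ltac:(lra)))|apply (proj2 (Hflow x ltac:(lra)))]; exact Ht.
Qed.

Lemma flow_diff_t0 h : n1 h < Y -> flow_diff h t0 = h.
Proof.
  intros Hh. pose proof Y_le_r. pose proof (shifted_close h Hh). pose proof center_close.
  unfold flow_diff. rewrite (proj1 (Hflow (vadd x h) ltac:(lra))), (proj1 (Hflow x ltac:(lra))).
  apply vadd_vsub_l.
Qed.

(** A linear combination [sum_p c_p (flow_diff h_p)] of flow differences, given by the list of
    pairs [(c_p, h_p)]; [comb_defect] bounds its deviation from a solution of the linearised
    equation. *)
Definition comb_diff (l : list (R * V3)) (tau : R) : V3 :=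
  fold_right (fun p acc => vadd (vscal (fst p) (flow_diff (snd p) tau)) acc) v0 l.
Definition comb_field_diff (l : list (R * V3)) (tau : R) : V3 :=
  fold_right (fun p acc => vadd (vscal (fst p) (field_diff (snd p) tau)) acc) v0 l.
Definition comb_init (l : list (R * V3)) : V3 :=
  fold_right (fun p acc => vadd (vscal (fst p) (snd p)) acc) v0 l.
Definition comb_defect (l : list (R * V3)) : R :=
  fold_right (fun p acc => Rabs (fst p) * (7 * M2) * (n1 (snd p) * n1 (snd p)) + acc) 0 l.
Definition all_close (l : list (R * V3)) : Prop := forall p, In p l -> n1 (snd p) < Y.

Lemma comb_defect_ge0 l : 0 <= comb_defect l.
Proof.
  induction l as [|p l IH]; simpl; [lra|]. pose proof M2_ge0. pose proof (Rabs_pos (fst p)).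
  pose proof (n1_ge0 (snd p)).
  assert (0 <= Rabs (fst p) * (7 * M2) * (n1 (snd p) * n1 (snd p))) by (repeat apply Rmult_le_pos; lra).
  lra.
Qed.

Lemma all_close_cons p l : all_close (p :: l) -> n1 (snd p) < Y /\ all_close l.
Proof. intros Ha. split; [apply Ha; left; reflexivity|intros q Hq; apply Ha; right; exact Hq]. Qed.

Lemma comb_diff_deriv l tau : all_close l -> t0 - del < tau < t0 + del ->
  is_vderiv (comb_diff l) tau (comb_field_diff l tau).
Proof.
  intros Ha Ht. induction l as [|p l IH]; [apply is_vderiv_const|].
  apply all_close_cons in Ha as [Hp Ha]. simpl.
  apply (is_vderiv_vadd (fun s => vscal (fst p) (flow_diff (snd p) s)) (comb_diff l)); auto.
  apply is_vderiv_vscal, flow_diff_deriv; assumption.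
Qed.

Lemma comb_diff_t0 l : all_close l -> comb_diff l t0 = comb_init l.
Proof.
  intros Ha. induction l as [|p l IH]; [reflexivity|].
  apply all_close_cons in Ha as [Hp Ha]. simpl. rewrite flow_diff_t0, IH by assumption. reflexivity.
Qed.

(** Steps [1 / scale n] of the difference quotients defining the Jacobian of the flow map;
    the offset [2 / Y] keeps them below [Y]. *)
Definition scale (n : nat) : R := INR n + 2 / Y.
Definition step (j n : nat) : V3 := vscal (/ scale n) (ebas j).

Lemma scale_pos n : 0 < scale n.
Proof.
  unfold scale. pose proof (pos_INR n). pose proof Y_pos.
  assert (0 < 2 / Y) by (apply Rdiv_lt_0_compat; lra). lra.
Qed.

Lemma n1_step j n : n1 (step j n) = / scale n.
Proof.
  unfold step. rewrite n1_scal, n1_ebas, Rmult_1_r, Rabs_pos_eq; [reflexivity|].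
  left; apply Rinv_0_lt_compat, scale_pos.
Qed.

Lemma step_close j n : n1 (step j n) < Y.
Proof.
  rewrite n1_step. pose proof Y_pos. pose proof (pos_INR n).
  assert (Hs : 2 / Y <= scale n) by (unfold scale; lra).
  apply Rle_lt_trans with (/ (2 / Y)).
  - apply Rinv_le_contravar; [apply Rdiv_lt_0_compat; lra|exact Hs].
  - rewrite Rinv_div. lra.
Qed.

Lemma inv_scale_eventually_lt eps : 0 < eps -> exists N, forall n, (n >= N)%nat -> / scale n < eps.
Proof.
  intros He. destruct (archimed_cor1 eps He) as [N [HN HNp]].
  exists N. intros n Hn. eapply Rle_lt_trans; [|exact HN].
  apply Rinv_le_contravar; [apply lt_0_INR; lia|].
  unfold scale. pose proof (le_INR _ _ Hn). pose proof Y_pos.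
  assert (0 < 2 / Y) by (apply Rdiv_lt_0_compat; lra). lra.
Qed.

Section AdmissibleTime.

Variable T : R.
Hypothesis HT : admissible_time T.

Lemma flow_pair_in_cube h tau : n1 h < Y -> t0 <= tau <= t0 + T ->
  Rabs (tau - t0) < rho /\ cube x rho (phi tau t0 (vadd x h)) /\ cube x rho (phi tau t0 x).
Proof.
  intros Hh Ht.
  destruct (flow_in_cube T HT (vadd x h) (shifted_close h Hh) tau Ht) as [Hs Hc1].
  destruct (flow_in_cube T HT x center_close tau Ht) as [_ Hc2]. auto.
Qed.

Lemma n1_field_diff h tau : n1 h < Y -> t0 <= tau <= t0 + T ->
  n1 (field_diff h tau) <= LL * n1 (flow_diff h tau).
Proof.
  intros Hh Ht. destruct (flow_pair_in_cube h tau Hh Ht) as [Hs [Hc1 Hc2]].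
  apply f_lipschitz; auto.
Qed.

Lemma n1_flow_diff h tau : n1 h < Y -> t0 <= tau <= t0 + T ->
  n1 (flow_diff h tau) <= 3/2 * n1 h.
Proof.
  intros Hh Htau. pose proof HT as [HT0 [HTd [HTr [HTF HTL]]]].
  pose proof LL_ge0. pose proof (n1_ge0 h).
  assert (n1 (flow_diff h tau) <= n1 h + 2 * (LL * n1 h + 0) * (tau - t0)).
  { apply (gronwall_vderiv (flow_diff h) (field_diff h) t0 (t0 + T) LL 0 (n1 h) (2 * n1 h + 1));
      try lra.
    - intros s Hs. apply flow_diff_deriv; [exact Hh|lra].
    - rewrite flow_diff_t0 by exact Hh. lra.
    - nra.
    - intros s Hs _. pose proof (n1_field_diff h s Hh ltac:(lra)). lra. }
  assert (LL * (tau - t0) <= LL * T) by (apply Rmult_le_compat_l; lra). nra.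
Qed.

Lemma field_diff_taylor h tau : n1 h < Y -> t0 <= tau <= t0 + T ->
  n1 (vsub (field_diff h tau) (mapply (Gm tau (phi tau t0 x)) (flow_diff h tau)))
    <= 7 * M2 * (n1 h * n1 h).
Proof.
  intros Hh Ht. destruct (flow_pair_in_cube h tau Hh Ht) as [Hs [Hc1 Hc2]].
  unfold field_diff, flow_diff. eapply Rle_trans; [apply f_taylor2; auto|].
  fold (flow_diff h tau). pose proof (n1_flow_diff h tau Hh Ht).
  pose proof (n1_ge0 (flow_diff h tau)). pose proof (n1_ge0 h). pose proof M2_ge0.
  assert (n1 (flow_diff h tau) * n1 (flow_diff h tau) <= (3/2 * n1 h) * (3/2 * n1 h))
    by (apply Rmult_le_compat; lra).
  nra.
Qed.

Lemma comb_field_diff_linear l tau : all_close l -> t0 <= tau <= t0 + T ->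
  n1 (vsub (comb_field_diff l tau) (mapply (Gm tau (phi tau t0 x)) (comb_diff l tau)))
    <= comb_defect l.
Proof.
  intros Ha Ht. set (M := Gm tau (phi tau t0 x)).
  induction l as [|p l IH].
  - simpl. rewrite mapply_v0, vsub_diag, n1_v0. lra.
  - apply all_close_cons in Ha as [Hp Ha]. simpl. rewrite mapply_vadd_scal.
    replace (vsub (vadd (vscal (fst p) (field_diff (snd p) tau)) (comb_field_diff l tau))
              (vadd (vscal (fst p) (mapply M (flow_diff (snd p) tau))) (mapply M (comb_diff l tau))))
      with (vadd (vscal (fst p) (vsub (field_diff (snd p) tau) (mapply M (flow_diff (snd p) tau))))
                 (vsub (comb_field_diff l tau) (mapply M (comb_diff l tau))))
      by (unfold vadd, vsub, vscal; simpl; vec_ring).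
    eapply Rle_trans; [apply n1_vadd|]. rewrite n1_scal.
    assert (Rabs (fst p) * n1 (vsub (field_diff (snd p) tau) (mapply M (flow_diff (snd p) tau))) <=
            Rabs (fst p) * (7 * M2 * (n1 (snd p) * n1 (snd p))))
      by (apply Rmult_le_compat_l; [apply Rabs_pos|exact (field_diff_taylor (snd p) tau Hp Ht)]).
    specialize (IH Ha). lra.
Qed.

(** The combination nearly solves the linearised equation, so Gronwall controls it. *)
Lemma comb_diff_bound l : all_close l ->
  n1 (comb_diff l (t0 + T)) <= n1 (comb_init l) + 2 * (LL * n1 (comb_init l) + comb_defect l) * T.
Proof.
  intros Ha. pose proof HT as [HT0 [HTd [HTr [HTF HTL]]]].
  pose proof LL_ge0. pose proof (n1_ge0 (comb_init l)). pose proof (comb_defect_ge0 l).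
  replace T with (t0 + T - t0) at 2 by ring.
  apply (gronwall_vderiv (comb_diff l) (comb_field_diff l) t0 (t0 + T) LL (comb_defect l)
     (n1 (comb_init l)) (n1 (comb_init l) + 2 * (LL * n1 (comb_init l) + comb_defect l) * T + 1));
    try lra.
  - intros s Hs. apply comb_diff_deriv; [exact Ha|lra].
  - rewrite comb_diff_t0 by exact Ha. lra.
  - intros s Hs _.
    pose proof (comb_field_diff_linear l s Ha ltac:(lra)).
    destruct (flow_in_cube T HT x center_close s ltac:(lra)) as [Hs1 Hc].
    pose proof (n1_mapply (Gm s (phi s t0 x)) (comb_diff l s)).
    pose proof (mnorm_Gm s (phi s t0 x) Hs1 Hc). pose proof (n1_ge0 (comb_diff l s)).
    pose proof (n1_vsub_triangle (comb_field_diff l s) (mapply (Gm s (phi s t0 x)) (comb_diff l s)) v0)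
      as Htri.
    rewrite !n1_vsub_v0 in Htri.
    assert (mnorm (Gm s (phi s t0 x)) * n1 (comb_diff l s) <= LL * n1 (comb_diff l s))
      by (apply Rmult_le_compat_r; lra).
    lra.
Qed.

Definition diff_quot (j n : nat) : V3 := vscal (scale n) (flow_diff (step j n) (t0 + T)).

Lemma diff_quot_cauchy_bound j n m :
  n1 (vsub (diff_quot j n) (diff_quot j m)) <= 14 * M2 * T * (/ scale n + / scale m).
Proof.
  set (l := (scale n, step j n) :: (- scale m, step j m) :: nil).
  assert (Ha : all_close l) by (intros p [<-|[<-|[]]]; apply step_close).
  pose proof (comb_diff_bound l Ha) as Hc.
  pose proof (scale_pos n). pose proof (scale_pos m).
  assert (E0 : comb_init l = v0).
  { unfold comb_init, l, step; simpl. unfold vadd, vscal, ebas, v0.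
    destruct j as [|[|j]]; simpl; apply f_equal2; [apply f_equal2| |apply f_equal2| |apply f_equal2|];
      field; lra. }
  assert (E1 : comb_diff l (t0 + T) = vsub (diff_quot j n) (diff_quot j m))
    by (unfold comb_diff, l, diff_quot; simpl; unfold vadd, vscal, vsub, v0; simpl; vec_ring).
  assert (E2 : comb_defect l = 7 * M2 * (/ scale n + / scale m)).
  { unfold comb_defect, l; simpl. rewrite !n1_step, Rabs_Ropp, !Rabs_pos_eq by lra. field. lra. }
  rewrite E0, E1, E2, n1_v0 in Hc. lra.
Qed.

Lemma diff_quot_cv i j : (i < 3)%nat -> exists l, Un_cv (fun n => cmp (diff_quot j n) i) l.
Proof.
  intros Hi. pose proof M2_ge0. pose proof HT as [HT0 _].
  destruct (R_complete (fun n => cmp (diff_quot j n) i)) as [l Hl]; [|exists l; exact Hl].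
  intros eps He.
  assert (Hpos : 0 < 28 * M2 * T + 1) by nra.
  destruct (inv_scale_eventually_lt (eps / (28 * M2 * T + 1))) as [N HN];
    [apply Rdiv_lt_0_compat; lra|].
  exists N. intros n m Hn Hm. unfold Rdist.
  pose proof (diff_quot_cauchy_bound j n m).
  pose proof (n1_cmp (vsub (diff_quot j n) (diff_quot j m)) i Hi) as Hc.
  replace (cmp (vsub (diff_quot j n) (diff_quot j m)) i)
    with (cmp (diff_quot j n) i - cmp (diff_quot j m) i) in Hc
    by (destruct i as [|[|[|i]]]; try lia; reflexivity).
  pose proof (HN n Hn). pose proof (HN m Hm).
  pose proof (Rinv_0_lt_compat _ (scale_pos n)); pose proof (Rinv_0_lt_compat _ (scale_pos m)).
  assert (Heps : eps / (28 * M2 * T + 1) * (28 * M2 * T + 1) = eps) by (field; lra).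
  assert (14 * M2 * T * (/ scale n + / scale m) <= 28 * M2 * T * (eps / (28 * M2 * T + 1)))
    by (assert (0 <= 14 * M2 * T) by nra; nra).
  nra.
Qed.

Lemma flow_jacobian_exists : exists J : M3, forall i j, (i < 3)%nat ->
  Un_cv (fun n => cmp (diff_quot j n) i) (J i j).
Proof.
  assert (Hex : forall i j, exists l, (i < 3)%nat -> Un_cv (fun n => cmp (diff_quot j n) i) l).
  { intros i j. destruct (Compare_dec.lt_dec i 3) as [Hi|Hi]; [|exists 0; intros; lia].
    destruct (diff_quot_cv i j Hi) as [l Hl]. exists l; intros; exact Hl. }
  exists (fun i j => proj1_sig (constructive_indefinite_description _ (Hex i j))).
  intros i j. exact (proj2_sig (constructive_indefinite_description _ (Hex i j))).
Qed.

Lemma flow_diff_minus_id h tau : n1 h < Y -> t0 <= tau <= t0 + T ->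
  n1 (vsub (flow_diff h tau) h) <= 3 * LL * n1 h * (tau - t0).
Proof.
  intros Hh Htau. pose proof HT as [HT0 [HTd [HTr [HTF HTL]]]].
  pose proof LL_ge0. pose proof (n1_ge0 h).
  assert (n1 (vsub (flow_diff h tau) h) <= 0 + 2 * (0 * 0 + 3/2 * LL * n1 h) * (tau - t0)).
  { apply (gronwall_vderiv (fun s => vsub (flow_diff h s) h) (fun s => vsub (field_diff h s) v0)
      t0 (t0 + T) 0 (3/2 * LL * n1 h) 0 (3 * LL * n1 h * T + 1)); try lra; try nra.
    - intros s Hs. apply is_vderiv_vsub; [apply flow_diff_deriv; [exact Hh|lra]|apply is_vderiv_const].
    - rewrite flow_diff_t0, vsub_diag, n1_v0 by exact Hh. lra.
    - intros s Hs _. rewrite n1_vsub_v0.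
      pose proof (n1_field_diff h s Hh ltac:(lra)). pose proof (n1_flow_diff h s Hh ltac:(lra)).
      assert (LL * n1 (flow_diff h s) <= LL * (3/2 * n1 h)) by (apply Rmult_le_compat_l; lra).
      lra. }
  lra.
Qed.

(** Along the flow [G] stays within [e1] of [A] and [flow_diff h] within [O(T |h|)] of [h],
    so [flow_diff h] follows [h + (tau - t0) A h] up to [O((e1 + T) T |h|)]. *)
Lemma flow_diff_linearization h : n1 h < Y ->
  n1 (vsub (vsub (flow_diff h (t0 + T)) h) (vscal T (mapply A h)))
    <= 2 * (9/2 * e1 + 3 * mnorm A * LL * T) * n1 h * T.
Proof.
  intros Hh. pose proof HT as [HT0 [HTd [HTr [HTF HTL]]]].
  pose proof LL_ge0. pose proof (n1_ge0 h). pose proof (mnorm_ge0 A).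
  set (eta := (9/2 * e1 + 3 * mnorm A * LL * T) * n1 h).
  assert (Heta : 0 <= eta).
  { unfold eta. apply Rmult_le_pos; [|lra].
    assert (0 <= 3 * mnorm A * LL * T) by (repeat apply Rmult_le_pos; lra). lra. }
  assert (Hres : n1 (vsub (vsub (flow_diff h (t0 + T)) h) (vscal (t0 + T - t0) (mapply A h)))
                 <= 0 + 2 * (0 * 0 + eta) * (t0 + T - t0)).
  { apply (gronwall_vderiv (fun s => vsub (vsub (flow_diff h s) h) (vscal (s - t0) (mapply A h)))
      (fun s => vsub (vsub (field_diff h s) v0) (mapply A h)) t0 (t0 + T) 0 eta 0 (2 * eta * T + 1));
      try lra.
    - intros s Hs. apply is_vderiv_vsub; [|apply is_vderiv_linear].
      apply is_vderiv_vsub; [apply flow_diff_deriv; [exact Hh|lra]|apply is_vderiv_const].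
    - rewrite flow_diff_t0, vsub_diag, Rminus_diag by exact Hh.
      unfold n1, vsub, vscal, v0; simpl. rewrite !Rmult_0_l, !Rminus_0_r, Rabs_R0. lra.
    - intros s Hs _.
      replace (vsub (vsub (field_diff h s) v0) (mapply A h)) with
        (vadd (vsub (field_diff h s) (mapply A (flow_diff h s))) (mapply A (vsub (flow_diff h s) h)))
        by (rewrite mapply_vsub; unfold vadd, vsub, v0; simpl; vec_ring).
      eapply Rle_trans; [apply n1_vadd|].
      destruct (flow_pair_in_cube h s Hh ltac:(lra)) as [Hs1 [Hc1 Hc2]].
      pose proof (f_near_linear s _ _ Hs1 Hc1 Hc2) as Hlin. fold (field_diff h s) (flow_diff h s) in Hlin.
      pose proof (n1_flow_diff h s Hh ltac:(lra)).
      pose proof (n1_mapply A (vsub (flow_diff h s) h)).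
      pose proof (flow_diff_minus_id h s Hh ltac:(lra)).
      assert (3 * e1 * n1 (flow_diff h s) <= 3 * e1 * (3/2 * n1 h)) by (apply Rmult_le_compat_l; lra).
      assert (mnorm A * n1 (vsub (flow_diff h s) h) <= mnorm A * (3 * LL * n1 h * T)).
      { apply Rmult_le_compat_l; [lra|]. eapply Rle_trans; [eassumption|].
        apply Rmult_le_compat_l; [repeat apply Rmult_le_pos; lra|lra]. }
      unfold eta. nra. }
  replace (t0 + T - t0) with T in Hres by ring. unfold eta in Hres. lra.
Qed.

Section Jacobian.

Variable J : M3.
Hypothesis HJ : forall i j, (i < 3)%nat -> Un_cv (fun n => cmp (diff_quot j n) i) (J i j).

Lemma diff_quot_combination_cv h i : (i < 3)%nat ->
  Un_cv (fun n => cmp (vadd (vscal (cmp h 0) (diff_quot 0 n))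
                    (vadd (vscal (cmp h 1) (diff_quot 1 n)) (vscal (cmp h 2) (diff_quot 2 n)))) i)
        (cmp (mapply J h) i).
Proof.
  intros Hi.
  assert (Hc : forall (a b c l0 l1 l2 : R) (U0 U1 U2 : nat -> R),
     Un_cv U0 l0 -> Un_cv U1 l1 -> Un_cv U2 l2 ->
     Un_cv (fun n => a * U0 n + (b * U1 n + c * U2 n)) (l0 * a + l1 * b + l2 * c)).
  { intros a b c l0 l1 l2 U0 U1 U2 Q0 Q1 Q2.
    assert (Hk : forall (d : R) U l, Un_cv U l -> Un_cv (fun n => d * U n) (l * d)).
    { intros d U l Q. rewrite Rmult_comm. apply (CV_mult (fun _ => d) U); [|exact Q].
      intros e He; exists 0%nat; intros; unfold Rdist; rewrite Rminus_diag, Rabs_R0; lra. }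
    rewrite Rplus_assoc.
    apply (CV_plus (fun n => a * U0 n) (fun n => b * U1 n + c * U2 n)); [auto|].
    apply (CV_plus (fun n => b * U1 n) (fun n => c * U2 n)); auto. }
  destruct i as [|[|[|i]]]; try lia; unfold vadd, vscal, mapply, mrow; cbn [cmp];
    apply Hc; apply HJ; lia.
Qed.

Lemma flow_jacobian_approx h : n1 h < Y ->
  n1 (vsub (flow_diff h (t0 + T)) (mapply J h)) <= 14 * M2 * T * (n1 h * n1 h).
Proof.
  intros Hh. pose proof M2_ge0. pose proof HT as [HT0 _]. pose proof (n1_ge0 h).
  set (C := 14 * M2 * T * n1 h).
  assert (HC : 0 <= C) by (unfold C; repeat apply Rmult_le_pos; lra).
  apply (n1_limit_le _ _ (fun n => vadd (vscal (cmp h 0) (diff_quot 0 n))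
           (vadd (vscal (cmp h 1) (diff_quot 1 n)) (vscal (cmp h 2) (diff_quot 2 n))))
         (fun n => C * / scale n)).
  - intros i Hi. apply diff_quot_combination_cv; exact Hi.
  - intros eps He.
    destruct (inv_scale_eventually_lt (eps / (C + 1))) as [N HN]; [apply Rdiv_lt_0_compat; lra|].
    exists N. intros n Hn. specialize (HN n Hn). pose proof (Rinv_0_lt_compat _ (scale_pos n)).
    assert (eps / (C + 1) * (C + 1) = eps) by (field; lra). nra.
  - intros n.
    set (l := (1, h) :: (- (cmp h 0 * scale n), step 0 n) :: (- (cmp h 1 * scale n), step 1 n)
              :: (- (cmp h 2 * scale n), step 2 n) :: nil).
    assert (Ha : all_close l) by (intros p [<-|[<-|[<-|[<-|[]]]]]; try apply step_close; exact Hh).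
    pose proof (comb_diff_bound l Ha) as Hc.
    pose proof (scale_pos n).
    assert (E0 : comb_init l = v0).
    { unfold comb_init, l, step; simpl. rewrite (vec_eta h). unfold vadd, vscal, ebas, v0; simpl.
      apply f_equal2; [apply f_equal2|]; field; lra. }
    assert (E1 : comb_diff l (t0 + T) = vsub (flow_diff h (t0 + T))
        (vadd (vscal (cmp h 0) (diff_quot 0 n))
          (vadd (vscal (cmp h 1) (diff_quot 1 n)) (vscal (cmp h 2) (diff_quot 2 n)))))
      by (unfold comb_diff, l, diff_quot; simpl; unfold vadd, vscal, vsub, v0; simpl; vec_ring).
    assert (E2 : comb_defect l = 7 * M2 * (n1 h * n1 h) + 7 * M2 * n1 h * / scale n).
    { unfold comb_defect, l; simpl. rewrite !n1_step, !Rabs_Ropp, !Rabs_mult, Rabs_R1,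
        (Rabs_pos_eq (scale n)) by lra.
      unfold n1. field. lra. }
    rewrite E0, E1, E2, n1_v0 in Hc. unfold C. lra.
Qed.

Lemma flow_map_frechet : frechet_at (psi phi t0 T) x J.
Proof.
  intros eps He. pose proof M2_ge0. pose proof HT as [HT0 _]. pose proof Y_pos.
  assert (HC : 0 <= 14 * M2 * T) by (repeat apply Rmult_le_pos; lra).
  exists (Rmin Y (eps / (14 * M2 * T + 1))).
  split; [apply Rmin_pos; [lra|apply Rdiv_lt_0_compat; lra]|].
  intros h Hh. unfold psi. fold (flow_diff h (t0 + T)).
  pose proof (Rmin_l Y (eps / (14 * M2 * T + 1))); pose proof (Rmin_r Y (eps / (14 * M2 * T + 1))).
  eapply Rle_trans; [apply flow_jacobian_approx; lra|].
  pose proof (n1_ge0 h).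
  assert (eps / (14 * M2 * T + 1) * (14 * M2 * T + 1) = eps) by (field; lra).
  assert (14 * M2 * T * n1 h <= eps) by nra.
  replace (14 * M2 * T * (n1 h * n1 h)) with ((14 * M2 * T * n1 h) * n1 h) by ring.
  apply Rmult_le_compat_r; lra.
Qed.

(** Compare [J (s v)] with [flow_diff (s v)] and let [s] tend to [0]. *)
Lemma flow_jacobian_near_identity v :
  n1 (vsub (vsub (mapply J v) v) (vscal T (mapply A v)))
    <= (9 * e1 + 6 * mnorm A * LL * T) * T * n1 v.
Proof.
  pose proof (n1_ge0 v). pose proof M2_ge0. pose proof HT as [HT0 _]. pose proof Y_pos.
  assert (HC : 0 <= 14 * M2 * T) by (repeat apply Rmult_le_pos; lra).
  apply (le_of_le_plus_eps _ _ (Y / (n1 v + 1)) (14 * M2 * T * (n1 v * n1 v)));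
    [apply Rdiv_lt_0_compat; lra|nra|].
  intros s [Hs0 Hs1].
  assert (Hsv : n1 (vscal s v) < Y).
  { rewrite n1_scal, Rabs_pos_eq by lra.
    assert (Y / (n1 v + 1) * (n1 v + 1) = Y) by (field; lra). nra. }
  pose proof (flow_jacobian_approx (vscal s v) Hsv) as P1.
  pose proof (flow_diff_linearization (vscal s v) Hsv) as P2.
  set (Dh := flow_diff (vscal s v) (t0 + T)) in *.
  pose proof (n1_vsub (vsub (vsub Dh (vscal s v)) (vscal T (mapply A (vscal s v))))
                      (vsub Dh (mapply J (vscal s v)))) as P3.
  replace (vsub (vsub (vsub Dh (vscal s v)) (vscal T (mapply A (vscal s v))))
                (vsub Dh (mapply J (vscal s v))))
    with (vscal s (vsub (vsub (mapply J v) v) (vscal T (mapply A v)))) in P3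
    by (rewrite !mapply_vscal; unfold vsub, vscal; simpl; vec_ring).
  rewrite !n1_scal, Rabs_pos_eq in P3 by lra.
  rewrite n1_scal, Rabs_pos_eq in P1, P2 by lra.
  set (X := n1 (vsub (vsub (mapply J v) v) (vscal T (mapply A v)))) in *.
  apply (Rmult_le_reg_l s); [lra|]. nra.
Qed.

End Jacobian.

End AdmissibleTime.

Lemma admissible_time_exists : exists T1, 0 < T1 /\ forall T, 0 < T < T1 -> admissible_time T.
Proof.
  pose proof Fb_ge0. pose proof LL_ge0.
  set (T1 := Rmin (Rmin del rho) (Rmin (rho / (12 * Fb + 1)) (1 / (4 * LL + 1)))).
  pose proof (Rmin_l (Rmin del rho) (Rmin (rho / (12 * Fb + 1)) (1 / (4 * LL + 1)))).
  pose proof (Rmin_r (Rmin del rho) (Rmin (rho / (12 * Fb + 1)) (1 / (4 * LL + 1)))).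
  pose proof (Rmin_l del rho); pose proof (Rmin_r del rho).
  pose proof (Rmin_l (rho / (12 * Fb + 1)) (1 / (4 * LL + 1))).
  pose proof (Rmin_r (rho / (12 * Fb + 1)) (1 / (4 * LL + 1))).
  assert (E1 : rho / (12 * Fb + 1) * (12 * Fb + 1) = rho) by (field; lra).
  assert (E2 : 1 / (4 * LL + 1) * (4 * LL + 1) = 1) by (field; lra).
  exists T1. split.
  - repeat apply Rmin_pos; try lra; apply Rdiv_lt_0_compat; lra.
  - intros T [HT0 HT1]. unfold admissible_time, T1 in *.
    assert (T * (12 * Fb + 1) < rho) by nra.
    assert (T * (4 * LL + 1) < 1) by nra.
    repeat split; nra.
Qed.

Lemma flow_map_jacobian_estimate T : admissible_time T -> exists J,
  frechet_at (psi phi t0 T) x J /\ forall v,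
    n1 (vsub (vsub (mapply J v) v) (vscal T (mapply A v))) <= (9 * e1 + 6 * mnorm A * LL * T) * T * n1 v.
Proof.
  intros HT. destruct (flow_jacobian_exists T HT) as [J HJ].
  exists J. split; [apply flow_map_frechet|apply flow_jacobian_near_identity]; assumption.
Qed.

End FlowEstimates.

Lemma flow_map_jacobian_near_identity D f phi t0 x A :
  open_domain D -> C3_field D f -> D t0 x -> spatial_jacobian f t0 x A ->
  is_flow_near D f phi t0 x ->
  forall eps, 0 < eps -> exists T1, 0 < T1 /\ forall T, 0 < T < T1 -> exists J,
    frechet_at (psi phi t0 T) x J /\
    forall v, n1 (vsub (vsub (mapply J v) v) (vscal T (mapply A v))) <= eps * T * n1 v.
Proof.
  intros Ho Hf Hx HA [del [r [Hdel [Hr Hfl]]]] eps Heps.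
  destruct (local_bounds_exist D f t0 x A Ho Hf Hx HA (eps / 18) ltac:(lra))
    as [rho [G [H [M2 [Fb [Hrho Hb]]]]]].
  assert (Hflow : forall y, n1 (vsub y x) < r -> phi t0 t0 y = y /\ forall tau,
      t0 - del < tau < t0 + del -> is_vderiv (fun s => phi s t0 y) tau (f tau (phi tau t0 y))).
  { intros y Hy. destruct (Hfl y Hy) as [E P]. split; [exact E|]. intros tau Ht. exact (proj2 (P tau Ht)). }
  destruct (admissible_time_exists f t0 x A rho G H M2 Fb (eps / 18) del Hb Hrho Hdel ltac:(lra))
    as [T1 [HT1 Hadm]].
  set (C := mnorm A * LL A (eps / 18)).
  assert (HC : 0 <= C) by (apply Rmult_le_pos; [apply mnorm_ge0|apply LL_ge0; lra]).
  exists (Rmin T1 (eps / (12 * C + 1))). split; [apply Rmin_pos; [lra|apply Rdiv_lt_0_compat; lra]|].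
  intros T [HT0 HTm]. pose proof (Rmin_l T1 (eps / (12 * C + 1))); pose proof (Rmin_r T1 (eps / (12 * C + 1))).
  destruct (flow_map_jacobian_estimate f phi t0 x A rho G H M2 Fb (eps / 18) del r Hb Hrho Hr
              ltac:(lra) Hflow T (Hadm T ltac:(lra))) as [J [HJ HJb]].
  exists J. split; [exact HJ|]. intros v. eapply Rle_trans; [apply HJb|].
  apply Rmult_le_compat_r; [apply n1_ge0|]. apply Rmult_le_compat_r; [lra|].
  assert (eps / (12 * C + 1) * (12 * C + 1) = eps) by (field; lra).
  replace (6 * mnorm A * LL A (eps / 18) * T) with (6 * C * T) by (unfold C; ring). nra.
Qed.

Lemma incompressible_trace D f t0 x A : incompressible D f -> D t0 x ->
  spatial_jacobian f t0 x A -> A 0%nat 0%nat + A 1%nat 1%nat + A 2%nat 2%nat = 0.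
Proof.
  intros Hinc Hx HA. destruct (Hinc t0 x Hx) as [A' [HA' Htr]].
  assert (E : forall i, (i < 3)%nat -> A' i i = A i i)
    by (intros i Hi; exact (uniqueness_limite _ _ _ _ (HA' i i Hi Hi) (HA i i Hi Hi))).
  rewrite <- (E 0%nat), <- (E 1%nat), <- (E 2%nat) by lia. exact Htr.
Qed.

Theorem mainTheorem4 (D : R -> V3 -> Prop) (f : R -> V3 -> V3)
  (phi : R -> R -> V3 -> V3) (t0 : R) (x : V3) :
  open_domain D ->
  C3_field D f ->
  incompressible D f ->
  D t0 x ->
  (exists A, spatial_jacobian f t0 x A /\ det3 A <> 0) ->
  is_flow_near D f phi t0 x ->
  exists Tmin, 0 < Tmin /\
    forall T, 0 < T < Tmin -> mesohyperbolic phi t0 T x.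
Proof.
  intros Ho Hf Hinc Hx [A [HA Hdet]] Hflow.
  destruct (near_identity_no_unit_eigenvalue A (incompressible_trace D f t0 x A Hinc Hx HA) Hdet)
    as [eps [T2 [Heps [HT2 Hno_unit]]]].
  destruct (flow_map_jacobian_near_identity D f phi t0 x A Ho Hf Hx HA Hflow eps Heps)
    as [T1 [HT1 Hjac]].
  exists (Rmin T1 T2). split; [apply Rmin_pos; assumption|].
  intros T [HT0 HT]. pose proof (Rmin_l T1 T2). pose proof (Rmin_r T1 T2).
  destruct (Hjac T ltac:(lra)) as [J [HJ HJ_near]].
  exists J. split; [exact HJ|]. apply (Hno_unit T J); [lra|exact HJ_near].
Qed.
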